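(* Assume $(K-1)P^2<1$. Then: (i) the functions $h_N(z)=\psi^{s*}_N(z,z_0)+\frac{1}{2\pi}\log|z-z_0|$ are harmonic on $D\cap\mathbb{C}$ and converge uniformly on every compact subset of $D\cap\mathbb{C}$. Consequently $\psi^s(z,z_0):=\lim_{N\to\infty}\psi^{s*}_N(z,z_0)$ exists for every finite $z\in D\setminus\{z_0\}$, is harmonic in $z$ on $(D\cap\mathbb{C})\setminus\{z_0\}$, and $\psi^s(z,z_0)+\frac{1}{2\pi}\log|z-z_0|$ extends to a harmonic function in a neighborhood of $z_0$; (ii) for each $j=1,\ldots,K$, the restrictions of $\psi^{s*}_N(\cdot,z_0)$ to the circle $L_j$ converge, uniformly in $z\in L_j$, to a finite constant $C_j$ (independent of $z\in L_j$).
   Context: Let $K\ge 2$. Let $L_j=\{z:|z-c_j|=R_j\}$, $j=1,\dots,K$, be circles in $\mathbb{C}$ whose closed disks $\{|z-c_j|\le R_j\}$ are pairwise disjoint, and let $D$ be the domain in the extended complex plane exterior to all of these closed disks (so $D$ contains $\infty$). Write $\operatorname{int}L_j$ for the open disk $|z-c_j|<R_j$. Let $T_j(z)=c_j+\frac{R_j^2}{\bar z-\bar c_j}$ be the inversion in $L_j$ (with $T_j(c_j)=\infty$, $T_j(\infty)=c_j$). Fix a finite point $z_0\in D$. For $M\ge 0$, the level-$M$ points are the multiset of points $T_{i_1}\circ T_{i_2}\circ\cdots\circ T_{i_M}(z_0)$ over all index words $(i_1,\ldots,i_M)\in\{1,\ldots,K\}^M$ with $i_k\ne i_{k+1}$ for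 $k=1,\ldots,M-1$ (level 0 is the single point $z_0$); there are $K(K-1)^{M-1}$ level-$M$ points for $M\ge1$, each lying in $\operatorname{int}L_{i_1}$. Define $\psi^s_N(z,z_0)=-\frac{1}{2\pi}\sum_{M=0}^{N}(-1)^M\sum_{\zeta\in\text{level }M}\log|z-\zeta|$ (sum with multiplicity), and $\psi^{s*}_N(z,z_0)=\frac{(K-1)\psi^s_N(z,z_0)+\psi^s_{N+1}(z,z_0)}{K}$. Define $P_j=\max\left\{\frac{R_j}{|z_0-c_j|},\ \frac{R_j}{|c_j-c_l|-R_l}\ (l=1,\ldots,K,\ l\ne j)\right\}$ and $P=\max\{P_1,\ldots,P_K\}$. *)

(* the complex plane is modelled as R*R. *)
From Stdlib Require Import Reals List Arith.
Import ListNotations.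
Open Scope R_scope.

Definition pt := (R * R)%type.

Definition padd (p q : pt) : pt := (fst p + fst q, snd p + snd q).
Definition psub (p q : pt) : pt := (fst p - fst q, snd p - snd q).
Definition pscale (a : R) (p : pt) : pt := (a * fst p, a * snd p).
Definition nsq (p : pt) : R := fst p * fst p + snd p * snd p.
Definition pdist (p q : pt) : R := sqrt (nsq (psub p q)).

(* Inversion in the circle |z - c| = r:  T(z) = c + r^2/conj(z - c)
   = c + r^2 (z - c)/|z - c|^2. *)
Definition inv_circle (c : pt) (r : R) (z : pt) : pt :=
  padd c (pscale (r * r / nsq (psub z c)) (psub z c)).

(* Index words (i_1,...,i_M) over {0,...,K-1} with i_k <> i_{k+1};
   the head of the list is i_1. *)
Fixpoint words (K M : nat) : list (list nat) :=
  match M with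
  | O => [ [] ]
  | S M' => flat_map (fun w =>
              map (fun i => i :: w)
                (filter (fun i => match w with
                                  | [] => true
                                  | j :: _ => negb (Nat.eqb i j) end)
                        (seq 0 K)))
              (words K M')
  end.

Definition word_point (c : nat -> pt) (r : nat -> R) (z0 : pt) (w : list nat) : pt :=
  fold_right (fun i z => inv_circle (c i) (r i) z) z0 w.

Definition level_sum (K : nat) (c : nat -> pt) (r : nat -> R) (z0 : pt)
  (M : nat) (z : pt) : R :=
  fold_right Rplus 0 (map (fun w => ln (pdist z (word_point c r z0 w))) (words K M)).

Definition psi_s (K : nat) (c : nat -> pt) (r : nat -> R) (z0 : pt)
  (N : nat) (z : pt) : R :=
  - / (2 * PI) * sum_f_R0 (fun M => (-1) ^ M * level_sum K c r z0 M z) N.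

Definition psi_s_star (K : nat) (c : nat -> pt) (r : nat -> R) (z0 : pt)
  (N : nat) (z : pt) : R :=
  ((INR K - 1) * psi_s K c r z0 N z + psi_s K c r z0 (S N) z) / INR K.

Definition P_j (K : nat) (c : nat -> pt) (r : nat -> R) (z0 : pt) (j : nat) : R :=
  fold_right Rmax (r j / pdist z0 (c j))
    (map (fun l => r j / (pdist (c j) (c l) - r l))
       (filter (fun l => negb (Nat.eqb l j)) (seq 0 K))).

Definition P_max (K : nat) (c : nat -> pt) (r : nat -> R) (z0 : pt) : R :=
  fold_right Rmax 0 (map (P_j K c r z0) (seq 0 K)).

(* finite part D ∩ C of the domain exterior to the closed disks *)
Definition Dom (K : nat) (c : nat -> pt) (r : nat -> R) (z : pt) : Prop :=
  forall j, (j < K)%nat -> pdist z (c j) > r j.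

Definition cont_in (U : pt -> Prop) (g : pt -> R) (p : pt) : Prop :=
  forall eps, eps > 0 -> exists d, d > 0 /\
    forall q, U q -> pdist q p < d -> Rabs (g q - g p) < eps.

Definition harmonic_on (U : pt -> Prop) (f : pt -> R) : Prop :=
  exists fx fy fxx fxy fyx fyy : pt -> R,
    forall p, U p ->
      derivable_pt_lim (fun t => f (t, snd p)) (fst p) (fx p) /\
      derivable_pt_lim (fun t => f (fst p, t)) (snd p) (fy p) /\
      derivable_pt_lim (fun t => fx (t, snd p)) (fst p) (fxx p) /\
      derivable_pt_lim (fun t => fx (fst p, t)) (snd p) (fxy p) /\
      derivable_pt_lim (fun t => fy (t, snd p)) (fst p) (fyx p) /\
      derivable_pt_lim (fun t => fy (fst p, t)) (snd p) (fyy p) /\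
      cont_in U fxx p /\ cont_in U fxy p /\ cont_in U fyx p /\ cont_in U fyy p /\
      fxx p + fyy p = 0.

Definition compact2 (S : pt -> Prop) : Prop :=
  (exists B, forall p, S p -> pdist p (0, 0) <= B) /\
  (forall p, (forall eps, eps > 0 -> exists q, S q /\ pdist p q < eps) -> S p).

Definition unif_cv_on (S : pt -> Prop) (h : nat -> pt -> R) : Prop :=
  exists g : pt -> R, forall eps, eps > 0 -> exists N0, forall N z,
    (N >= N0)%nat -> S z -> Rabs (h N z - g z) < eps.

(** Write B_M(phi) for the sum of phi over the level-M points zeta_w. Up to the factor -1/(2 pi),
    psi^{s*}_N(z) is sum_{M <= N} (-1)^M B_M + (-1)^{N+1} B_{N+1} / K with phi = ln|z - .|, so consecutive
    partial sums differ by +-((K-1) B_{n+1} - B_{n+2}) / K. Grouping the words of length n+2 by their first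
    n+1 letters turns this into a sum of K (K-1)^{n+1} differences phi(zeta_u) - phi(zeta_{uk}), where the
    two points are the images of T_m z0 and T_m T_k z0 under the same n inversions, each contracting by
    P^2 on the disks |zeta - c_j| <= P r_j. Hence for every kernel k(z - .) that is Lipschitz away from
    these disks the partial sums converge like ((K-1) P^2)^n, uniformly on the closure of D. Applied to
    ln|w| and to its first and second partial derivatives, this makes the limit C^2 with vanishing
    Laplacian. For (ii), when z, z' lie on L_j the inversion T_j preserves ln|z - zeta| - ln|z' - zeta|,
    so the words beginning with j cancel the words they were built from, and the difference of the partial
    sums at z and z' telescopes to a boundary term that decays at the same rate. *)

From Stdlib Require Import Reals List Arith Lra Lia Classical ClassicalEpsilon FunctionalExtensionality.
From Coquelicot Require Coquelicot.
Import ListNotations.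
Open Scope R_scope.

Definition lsum {A} (l : list A) (f : A -> R) : R := fold_right Rplus 0 (map f l).

Lemma lsum_nil {A} (f : A -> R) : lsum [] f = 0.
Proof. reflexivity. Qed.

Lemma lsum_cons {A} a l (f : A -> R) : lsum (a :: l) f = f a + lsum l f.
Proof. reflexivity. Qed.

Lemma lsum_app {A} l1 l2 (f : A -> R) : lsum (l1 ++ l2) f = lsum l1 f + lsum l2 f.
Proof. induction l1 as [|a l1 IH]; simpl; [|rewrite lsum_cons, IH]; unfold lsum; simpl; lra. Qed.

Lemma lsum_flat_map {A B} (g : A -> list B) l (f : B -> R) :
  lsum (flat_map g l) f = lsum l (fun a => lsum (g a) f).
Proof. induction l as [|a l IH]; simpl; [reflexivity|]. rewrite lsum_app, lsum_cons, IH. reflexivity. Qed.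

Lemma lsum_map {A B} (g : A -> B) l (f : B -> R) : lsum (map g l) f = lsum l (fun a => f (g a)).
Proof. unfold lsum. rewrite map_map. reflexivity. Qed.

Lemma lsum_filter {A} (p : A -> bool) l f :
  lsum (filter p l) f = lsum l (fun a => if p a then f a else 0).
Proof.
  induction l as [|a l IH]; simpl; [reflexivity|].
  rewrite lsum_cons. destruct (p a); rewrite ?lsum_cons, IH; lra.
Qed.

Lemma lsum_ext_in {A} l (f g : A -> R) : (forall a, In a l -> f a = g a) -> lsum l f = lsum l g.
Proof.
  induction l as [|a l IH]; intros H; [reflexivity|].
  rewrite !lsum_cons, H, IH; auto with datatypes.
Qed.

Lemma lsum_plus {A} l (f g : A -> R) : lsum l (fun a => f a + g a) = lsum l f + lsum l g.
Proof. induction l as [|a l IH]; [unfold lsum; simpl; lra|]. rewrite !lsum_cons, IH. ring. Qed.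

Lemma lsum_scal {A} l (f : A -> R) k : lsum l (fun a => k * f a) = k * lsum l f.
Proof. induction l as [|a l IH]; [unfold lsum; simpl; lra|]. rewrite !lsum_cons, IH. ring. Qed.

Lemma lsum_opp {A} l (f : A -> R) : lsum l (fun a => - f a) = - lsum l f.
Proof. induction l as [|a l IH]; [unfold lsum; simpl; lra|]. rewrite !lsum_cons, IH. ring. Qed.

Lemma lsum_minus {A} l (f g : A -> R) : lsum l (fun a => f a - g a) = lsum l f - lsum l g.
Proof. induction l as [|a l IH]; [unfold lsum; simpl; lra|]. rewrite !lsum_cons, IH. ring. Qed.

Lemma lsum_const {A} l (k : R) : lsum (A:=A) l (fun _ => k) = INR (length l) * k.
Proof.
  induction l as [|a l IH]; [unfold lsum; simpl; lra|].
  rewrite lsum_cons, IH. change (length (a :: l)) with (S (length l)). rewrite S_INR. ring.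
Qed.

Lemma lsum_swap {A B} (l1 : list A) (l2 : list B) f :
  lsum l1 (fun a => lsum l2 (fun b => f a b)) = lsum l2 (fun b => lsum l1 (fun a => f a b)).
Proof.
  induction l1 as [|a l1 IH].
  - rewrite lsum_nil, (lsum_ext_in l2 _ (fun _ => 0)) by reflexivity. rewrite lsum_const. ring.
  - rewrite lsum_cons, IH, <- lsum_plus. reflexivity.
Qed.

Lemma lsum_abs {A} l (f : A -> R) : Rabs (lsum l f) <= lsum l (fun a => Rabs (f a)).
Proof.
  induction l as [|a l IH]; [unfold lsum; simpl; rewrite Rabs_R0; lra|].
  rewrite !lsum_cons. eapply Rle_trans; [apply Rabs_triang|lra].
Qed.

Lemma lsum_le {A} l (f g : A -> R) : (forall a, In a l -> f a <= g a) -> lsum l f <= lsum l g.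
Proof.
  induction l as [|a l IH]; intros H; [unfold lsum; simpl; lra|].
  rewrite !lsum_cons. apply Rplus_le_compat; [apply H; simpl; auto|].
  apply IH. intros; apply H; simpl; auto.
Qed.

Lemma if_lsum {A} (b : bool) l (f : A -> R) :
  (if b then lsum l f else 0) = lsum l (fun a => if b then f a else 0).
Proof. destruct b; [reflexivity|]. rewrite lsum_const. ring. Qed.

Lemma lsum_seq_indicator (K j : nat) (f : nat -> R) : (j < K)%nat ->
  lsum (seq 0 K) (fun i => if Nat.eqb i j then f i else 0) = f j.
Proof.
  intros Hj.
  assert (Hs : forall s n, (n <= j)%nat -> (j < n + s)%nat ->
    lsum (seq n s) (fun i => if Nat.eqb i j then f i else 0) = f j).
  { induction s as [|s IH]; intros n H1 H2; [lia|]. simpl. rewrite lsum_cons.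
    destruct (Nat.eqb_spec n j) as [->|Hn].
    - rewrite (lsum_ext_in (seq (S j) s) _ (fun _ => 0)), lsum_const; [ring|].
      intros a Ha. apply in_seq in Ha. destruct (Nat.eqb_spec a j); [lia|auto].
    - rewrite IH by lia. ring. }
  apply Hs; lia.
Qed.

Lemma length_filter_neq (K h : nat) : (h < K)%nat ->
  length (filter (fun i => negb (Nat.eqb i h)) (seq 0 K)) = (K - 1)%nat.
Proof.
  intros H.
  assert (Hs : forall s n, (n <= h)%nat -> (h < n + s)%nat ->
    length (filter (fun i => negb (Nat.eqb i h)) (seq n s)) = (s - 1)%nat).
  { induction s as [|s IH]; intros n H1 H2; [lia|]. simpl. destruct (Nat.eqb_spec n h) as [->|Hn].
    - simpl. rewrite forallb_filter_id; [rewrite length_seq; lia|].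
      apply forallb_forall. intros x Hx. apply in_seq in Hx. apply Bool.negb_true_iff, Nat.eqb_neq. lia.
    - simpl. rewrite IH; lia. }
  rewrite Hs; lia.
Qed.

(** * Sums over admissible words *)

Definition can_prepend (i : nat) (w : list nat) : bool :=
  match w with [] => true | j :: _ => negb (Nat.eqb i j) end.

Definition can_append (k : nat) (u : list nat) : bool :=
  match u with [] => true | _ => negb (Nat.eqb k (last u 0%nat)) end.

Lemma can_append_snoc k u m : can_append k (u ++ [m]) = negb (Nat.eqb k m).
Proof.
  unfold can_append. destruct (u ++ [m]) eqn:Hum; [destruct u; discriminate|].
  rewrite <- Hum, last_last. reflexivity.
Qed.

Lemma lsum_words_S K M (F : list nat -> R) :
  lsum (words K (S M)) F =
  lsum (words K M) (fun w => lsum (seq 0 K) (fun i => if can_prepend i w then F (i :: w) else 0)).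
Proof.
  simpl. rewrite lsum_flat_map. apply lsum_ext_in. intros w _.
  rewrite lsum_map, lsum_filter. reflexivity.
Qed.

Lemma can_append_prepend k i u :
  (can_append k u && can_prepend i (u ++ [k]))%bool = (can_prepend i u && can_append k (i :: u))%bool.
Proof.
  destruct u as [|a [|b u]]; simpl; [now rewrite Nat.eqb_sym | apply Bool.andb_comm | apply Bool.andb_comm].
Qed.

Lemma lsum_guard_guard {A} (b : A -> bool) (b' : A -> nat -> bool) l (F : A -> nat -> R) K :
  lsum l (fun a => if b a then lsum (seq 0 K) (fun k => if b' a k then F a k else 0) else 0) =
  lsum l (fun a => lsum (seq 0 K) (fun k => if (b a && b' a k)%bool then F a k else 0)).
Proof.
  apply lsum_ext_in. intros a _. rewrite if_lsum. apply lsum_ext_in. intros k _.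
  destruct (b a), (b' a k); reflexivity.
Qed.

Lemma lsum_words_S_snoc K M (F : list nat -> R) :
  lsum (words K (S M)) F =
  lsum (words K M) (fun u => lsum (seq 0 K) (fun k => if can_append k u then F (u ++ [k]) else 0)).
Proof.
  revert F. induction M as [|M IH]; intros F.
  - rewrite lsum_words_S. reflexivity.
  - rewrite lsum_words_S, IH, lsum_words_S. apply lsum_ext_in. intros u _.
    rewrite (lsum_guard_guard (fun i => can_prepend i u) (fun i k => can_append k (i :: u))
               _ (fun i k => F ((i :: u) ++ [k]))).
    rewrite (lsum_guard_guard (fun k => can_append k u) (fun k i => can_prepend i (u ++ [k]))
               _ (fun k i => F (i :: u ++ [k]))).
    rewrite lsum_swap. apply lsum_ext_in. intros i _. apply lsum_ext_in. intros k _.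
    rewrite can_append_prepend. reflexivity.
Qed.

Fixpoint alternating (l : list nat) : Prop :=
  match l with
  | a :: ((b :: _) as t) => a <> b /\ alternating t
  | _ => True
  end.

Definition admissible K (w : list nat) : Prop := Forall (fun i => (i < K)%nat) w /\ alternating w.

Lemma alternating_tail a w : alternating (a :: w) -> alternating w.
Proof. destruct w; simpl; tauto. Qed.

Lemma words_admissible K M w : In w (words K M) -> admissible K w /\ length w = M.
Proof.
  revert w. induction M as [|M IH]; intros w Hw.
  - destruct Hw as [<-|[]]. repeat split; constructor.
  - simpl in Hw. apply in_flat_map in Hw. destruct Hw as [u [Hu Hw]].
    apply in_map_iff in Hw. destruct Hw as [i [<- Hi]]. apply filter_In in Hi. destruct Hi as [Hi Hne].
    apply in_seq in Hi. destruct (IH u Hu) as [[HF HC] HL]. split; [split|simpl; lia].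
    + constructor; [lia|auto].
    + destruct u as [|j u]; [exact I|]. split; auto.
      intros ->. rewrite Nat.eqb_refl in Hne. discriminate.
Qed.

Lemma words_S_nonempty K M w : In w (words K (S M)) -> w <> [].
Proof. intros Hw ->. destruct (words_admissible _ _ _ Hw) as [_ H]. discriminate. Qed.

Lemma admissible_snoc_inv K u k :
  admissible K (u ++ [k]) -> admissible K u /\ (k < K)%nat /\ can_append k u = true.
Proof.
  induction u as [|a u IH]; intros [HF HC].
  - inversion HF. repeat split; auto; constructor.
  - inversion HF as [|? ? Ha HF']; subst.
    destruct (IH (conj HF' (alternating_tail _ _ HC))) as [[HFu HCu] [Hk Hl]].
    repeat split; auto.
    + destruct u as [|b u]; [exact I|]. split; [apply HC|exact HCu].
    + destruct u as [|b u]; [|exact Hl]. apply Bool.negb_true_iff, Nat.eqb_neq. apply not_eq_sym, HC.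
Qed.

Lemma admissible_snoc K u k :
  admissible K u -> (k < K)%nat -> can_append k u = true -> admissible K (u ++ [k]).
Proof.
  induction u as [|a u IH]; intros [HF HC] Hk Hl.
  - split; [constructor; auto | exact I].
  - inversion HF as [|? ? Ha HF']; subst.
    assert (Hl' : can_append k u = true) by (destruct u; [reflexivity|exact Hl]).
    destruct (IH (conj HF' (alternating_tail _ _ HC)) Hk Hl') as [HF'' HC''].
    split; [constructor; auto|].
    destruct u as [|b u].
    + split; [|exact I]. intros ->. simpl in Hl. rewrite Nat.eqb_refl in Hl. discriminate.
    + split; [apply HC | exact HC''].
Qed.

Lemma admissible_last K u : admissible K u -> u <> [] -> (last u 0 < K)%nat.
Proof.
  intros [HF _] Hu. induction u as [|a u IH]; [congruence|].
  inversion HF; subst. destruct u; [auto|]. apply IH; auto. discriminate.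
Qed.

Lemma admissible_head K i w : admissible K (i :: w) -> (i < K)%nat.
Proof. intros [HF _]. inversion HF; auto. Qed.

Lemma lsum_can_append_const K u (X : R) : admissible K u -> u <> [] ->
  lsum (seq 0 K) (fun k => if can_append k u then X else 0) = (INR K - 1) * X.
Proof.
  intros Hv Hu. assert (Hl := admissible_last K u Hv Hu). destruct u as [|a u]; [congruence|].
  change (can_append ?k (a :: u)) with (negb (Nat.eqb k (last (a :: u) 0%nat))).
  rewrite <- lsum_filter, lsum_const, length_filter_neq, minus_INR by (auto; lia). simpl. ring.
Qed.

Lemma lsum_can_prepend_const K w (X : R) : admissible K w -> w <> [] ->
  lsum (seq 0 K) (fun i => if can_prepend i w then X else 0) = (INR K - 1) * X.
Proof.
  intros Hv Hu. destruct w as [|a w]; [congruence|]. assert (Ha := admissible_head K a w Hv).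
  change (can_prepend ?k (a :: w)) with (negb (Nat.eqb k a)).
  rewrite <- lsum_filter, lsum_const, length_filter_neq, minus_INR by (auto; lia). simpl. ring.
Qed.

Lemma length_words_S K M : (1 <= K)%nat ->
  INR (length (words K (S M))) = INR K * (INR K - 1) ^ M.
Proof.
  intros HK.
  assert (E : forall l : list (list nat), INR (length l) = lsum l (fun _ => 1))
    by (intros l; rewrite lsum_const; ring).
  induction M as [|M IH]; rewrite E, lsum_words_S.
  - simpl words. rewrite lsum_cons, lsum_nil. simpl can_prepend.
    rewrite lsum_const, length_seq. ring.
  - rewrite (lsum_ext_in _ _ (fun _ => (INR K - 1) * 1)), lsum_const, IH by
      (intros w Hw; apply lsum_can_prepend_const;
       [apply (words_admissible _ _ _ Hw) | apply (words_S_nonempty _ _ _ Hw)]).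
    simpl. ring.
Qed.

Lemma word_point_snoc c r z0 u k :
  word_point c r z0 (u ++ [k]) = word_point c r (inv_circle (c k) (r k) z0) u.
Proof. unfold word_point. rewrite fold_right_app. reflexivity. Qed.

(** * Distances and inversion in a circle *)

Lemma nsq_ge0 p : 0 <= nsq p.
Proof. unfold nsq. nra. Qed.

Lemma pdist_ge0 a b : 0 <= pdist a b.
Proof. apply sqrt_pos. Qed.

Lemma pdist_sym a b : pdist a b = pdist b a.
Proof. unfold pdist, nsq, psub; simpl. f_equal. ring. Qed.

Lemma pdist_sq a b : pdist a b * pdist a b = nsq (psub a b).
Proof. apply sqrt_sqrt, nsq_ge0. Qed.

Lemma pdist_of_nsq a b d : 0 <= d -> nsq (psub a b) = d * d -> pdist a b = d.
Proof. intros Hd E. unfold pdist. rewrite E. apply sqrt_square, Hd. Qed.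

Lemma pdist_triang a b d : pdist a d <= pdist a b + pdist b d.
Proof.
  set (u := pdist a b). set (v := pdist b d).
  assert (Hu : u * u = nsq (psub a b)) by apply pdist_sq.
  assert (Hv : v * v = nsq (psub b d)) by apply pdist_sq.
  assert (u0 : 0 <= u) by apply pdist_ge0. assert (v0 : 0 <= v) by apply pdist_ge0.
  unfold pdist at 1. rewrite <- (sqrt_square (u + v)) by lra. apply sqrt_le_1_alt.
  unfold nsq, psub in *; simpl in *.
  set (x1 := fst a - fst b) in *. set (y1 := snd a - snd b) in *.
  set (x2 := fst b - fst d) in *. set (y2 := snd b - snd d) in *.
  replace (fst a - fst d) with (x1 + x2) by (unfold x1, x2; ring).
  replace (snd a - snd d) with (y1 + y2) by (unfold y1, y2; ring).
  (* Cauchy-Schwarz, via Lagrange's identity *)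
  assert (CS : x1 * x2 + y1 * y2 <= u * v).
  { assert ((x1*x2 + y1*y2) * (x1*x2 + y1*y2) <= (u*v) * (u*v)).
    { replace ((u*v) * (u*v)) with ((u*u) * (v*v)) by ring. rewrite Hu, Hv.
      pose proof (Rle_0_sqr (x1*y2 - x2*y1)). unfold Rsqr in *. nra. }
    assert (0 <= u * v) by nra. destruct (Rle_or_lt (x1 * x2 + y1 * y2) (u * v)); [auto|nra]. }
  nra.
Qed.

Lemma pdist_pos a b : a <> b -> 0 < pdist a b.
Proof.
  intros H. apply sqrt_lt_R0. destruct a as [a1 a2], b as [b1 b2]. unfold nsq, psub; simpl.
  destruct (Req_dec a1 b1), (Req_dec a2 b2); subst; try congruence; nra.
Qed.

Lemma nsq_psub_pos a b : 0 < pdist a b -> 0 < nsq (psub a b).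
Proof. intros H. rewrite <- pdist_sq. nra. Qed.

Lemma inv_circle_sub_center c r z :
  psub (inv_circle c r z) c = pscale (r * r / nsq (psub z c)) (psub z c).
Proof. unfold inv_circle, padd, pscale, psub; simpl. f_equal; ring. Qed.

Lemma nsq_pscale a p : nsq (pscale a p) = a * a * nsq p.
Proof. unfold nsq, pscale; simpl. ring. Qed.

Lemma inv_circle_dist_center c r z : 0 < pdist z c ->
  pdist (inv_circle c r z) c = r * r / pdist z c.
Proof.
  intros Hz. assert (Hn := pdist_sq z c). apply pdist_of_nsq.
  - apply Rmult_le_pos; [nra | apply Rlt_le, Rinv_0_lt_compat; lra].
  - rewrite inv_circle_sub_center, nsq_pscale, <- Hn. field. lra.
Qed.

Lemma inv_circle_dist c r a b : 0 < pdist a c -> 0 < pdist b c ->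
  pdist (inv_circle c r a) (inv_circle c r b) = r * r * pdist a b / (pdist a c * pdist b c).
Proof.
  intros Ha Hb.
  assert (Hna := pdist_sq a c). assert (Hnb := pdist_sq b c). assert (Hab := pdist_sq a b).
  assert (0 <= pdist a b) by apply pdist_ge0.
  apply pdist_of_nsq.
  - apply Rmult_le_pos; [nra | apply Rlt_le, Rinv_0_lt_compat; nra].
  - transitivity (r * r * (r * r) * nsq (psub a b) / (nsq (psub a c) * nsq (psub b c))).
    + destruct a, b, c. unfold inv_circle, padd, pscale, psub, nsq in *; simpl in *.
      field. split; nra.
    + rewrite <- Hna, <- Hnb, <- Hab. field. lra.
Qed.

(* Apollonius' property of the inversion. *)
Lemma inv_circle_dist_on_circle c r z w : r > 0 -> pdist z c = r -> 0 < pdist w c ->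
  pdist z (inv_circle c r w) = r * pdist z w / pdist w c.
Proof.
  intros Hr Hz Hw. assert (Hnz := pdist_sq z c). assert (Hnw := pdist_sq w c).
  assert (Hzw := pdist_sq z w). assert (0 <= pdist z w) by apply pdist_ge0.
  rewrite Hz in Hnz. apply pdist_of_nsq.
  - apply Rmult_le_pos; [nra | apply Rlt_le, Rinv_0_lt_compat; lra].
  - transitivity (r * r * nsq (psub z w) / nsq (psub w c)).
    + destruct z as [x y], w as [u v], c as [a b].
      unfold inv_circle, padd, pscale, psub, nsq in *; simpl in *.
      replace (x - (a + r * r / ((u - a) * (u - a) + (v - b) * (v - b)) * (u - a)))
        with ((x - a) - r * r / ((u - a) * (u - a) + (v - b) * (v - b)) * (u - a)) by ring.
      replace (y - (b + r * r / ((u - a) * (u - a) + (v - b) * (v - b)) * (v - b)))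
        with ((y - b) - r * r / ((u - a) * (u - a) + (v - b) * (v - b)) * (v - b)) by ring.
      replace (x - u) with ((x - a) - (u - a)) by ring. replace (y - v) with ((y - b) - (v - b)) by ring.
      rewrite Hnz. field. nra.
    + rewrite <- Hnw, <- Hzw. field. lra.
Qed.

Lemma geometric_eventually_lt (C q eps : R) : 0 <= q < 1 -> 0 < eps ->
  exists N, forall n, (N <= n)%nat -> C * q ^ n < eps.
Proof.
  intros Hq He. assert (HC : 0 < Rabs C + 1) by (pose proof (Rabs_pos C); lra).
  destruct (pow_lt_1_zero q ltac:(rewrite Rabs_right; lra) (eps / (Rabs C + 1))) as [N HN].
  { apply Rdiv_lt_0_compat; auto. }
  exists N. intros n Hn. specialize (HN n Hn). rewrite Rabs_right in HN by (apply Rle_ge, pow_le; lra).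
  assert (0 <= q ^ n) by (apply pow_le; lra).
  apply Rle_lt_trans with ((Rabs C + 1) * q ^ n).
  - apply Rmult_le_compat_r; [auto | pose proof (RRle_abs C); lra].
  - apply (Rmult_lt_compat_l (Rabs C + 1)) in HN; auto. rewrite <- (Rmult_comm (eps / _)) in HN.
    replace (eps / (Rabs C + 1) * (Rabs C + 1)) with eps in HN by (field; lra). exact HN.
Qed.

Lemma uniform_limit_of_geometric_cauchy {T} (Z : T -> Prop) (s : nat -> T -> R) (C q : R) :
  0 <= q < 1 ->
  (forall z m n, Z z -> (n <= m)%nat -> Rabs (s m z - s n z) <= C * q ^ n) ->
  exists g : T -> R, forall z, Z z -> forall n, Rabs (s n z - g z) <= C * q ^ n.
Proof.
  intros Hq H.
  assert (Ex : forall z, exists l, Z z -> forall n, Rabs (s n z - l) <= C * q ^ n).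
  { intros z. destruct (classic (Z z)) as [Hz|Hz]; [|exists 0; tauto].
    assert (Hc : Cauchy_crit (fun n => s n z)).
    { intros eps He. destruct (geometric_eventually_lt C q eps Hq He) as [N HN]. exists N.
      intros n m Hn Hm. unfold R_dist. destruct (le_ge_dec n m).
      - rewrite Rabs_minus_sym. eapply Rle_lt_trans; [apply H|apply HN]; auto.
      - eapply Rle_lt_trans; [apply H|apply HN]; auto. }
    destruct (R_complete _ Hc) as [l Hl]. exists l. intros _ n.
    apply Rnot_lt_le. intros Hlt.
    destruct (Hl (Rabs (s n z - l) - C * q ^ n) ltac:(lra)) as [N HN].
    specialize (HN (max N n) ltac:(lia)). unfold R_dist in HN.
    assert (H1 := H z (max N n) n Hz ltac:(lia)).
    assert (H2 := Rabs_triang (s n z - s (max N n) z) (s (max N n) z - l)).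
    replace (s n z - s (max N n) z + (s (max N n) z - l)) with (s n z - l) in H2 by ring.
    rewrite Rabs_minus_sym in H1. lra. }
  apply choice in Ex. destruct Ex as [g Hg]. exists g. exact Hg.
Qed.

Lemma eq_0_of_le_geometric x C q : 0 <= q < 1 -> (forall n, Rabs x <= C * q ^ n) -> x = 0.
Proof.
  intros Hq H. destruct (Req_dec x 0) as [E|E]; auto. exfalso.
  assert (He : 0 < Rabs x) by (apply Rabs_pos_lt; auto).
  destruct (geometric_eventually_lt C q _ Hq He) as [N HN]. specialize (HN N (le_n N)).
  specialize (H N). lra.
Qed.

(** * The logarithmic kernel *)

Definition pnorm (w : pt) := sqrt (nsq w).

(* ln|w| and its partial derivatives up to order two. *)
Definition logk (w : pt) := ln (pnorm w).
Definition logk_x (w : pt) := fst w / nsq w.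
Definition logk_y (w : pt) := snd w / nsq w.
Definition logk_xx (w : pt) := (snd w * snd w - fst w * fst w) / (nsq w * nsq w).
Definition logk_xy (w : pt) := -2 * fst w * snd w / (nsq w * nsq w).
Definition logk_yy (w : pt) := - logk_xx w.

Definition lip_off_origin (k : pt -> R) := forall d, 0 < d -> exists L, 0 <= L /\
  forall w w', d <= pnorm w -> d <= pnorm w' -> Rabs (k w - k w') <= L * pnorm (psub w w').

Lemma pnorm_sq w : pnorm w * pnorm w = nsq w.
Proof. apply sqrt_sqrt, nsq_ge0. Qed.

Lemma pnorm_ge0 w : 0 <= pnorm w.
Proof. apply sqrt_pos. Qed.

Lemma pnorm_pdist w : pnorm w = pdist w (0, 0).
Proof. unfold pnorm, pdist, nsq, psub; simpl. f_equal. ring. Qed.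

Lemma pnorm_psub_psub z a b : pnorm (psub (psub z a) (psub z b)) = pdist a b.
Proof. unfold pnorm, pdist, nsq, psub; simpl. f_equal. ring. Qed.

Lemma pnorm_psub_psub_r z z' a : pnorm (psub (psub z a) (psub z' a)) = pdist z z'.
Proof. unfold pnorm, pdist, nsq, psub; simpl. f_equal. ring. Qed.

Lemma pnorm_rev_triang w w' : Rabs (pnorm w - pnorm w') <= pnorm (psub w w').
Proof.
  change (pnorm (psub w w')) with (pdist w w'). rewrite !pnorm_pdist.
  assert (H1 := pdist_triang w w' (0,0)). assert (H2 := pdist_triang w' w (0,0)).
  rewrite (pdist_sym w' w) in H2. apply Rabs_le. lra.
Qed.

Lemma pnorm_padd w w' : pnorm (padd w w') <= pnorm w + pnorm w'.
Proof.
  replace (pnorm (padd w w')) with (pdist w (psub (0,0) w'))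
    by (unfold pnorm, pdist, nsq, padd, psub; simpl; f_equal; ring).
  eapply Rle_trans; [apply (pdist_triang w (0,0))|]. rewrite <- pnorm_pdist.
  right. f_equal. unfold pnorm, pdist, nsq, psub; simpl. f_equal. ring.
Qed.

Lemma nsq_pos_of_pnorm w d : 0 < d -> d <= pnorm w -> 0 < nsq w.
Proof. intros Hd Hw. rewrite <- pnorm_sq. nra. Qed.

Lemma ln_lipschitz_ge a b d : 0 < d -> d <= a -> d <= b -> Rabs (ln a - ln b) <= Rabs (a - b) / d.
Proof.
  assert (Key : forall a b, 0 < d -> d <= b -> b <= a -> ln a - ln b <= (a - b) / d).
  { intros x y Hd Hy Hxy.
    replace (ln x - ln y) with (ln (x / y))
      by (unfold Rdiv; rewrite ln_mult, ln_Rinv; try apply Rinv_0_lt_compat; lra).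
    assert (H := exp_ineq1_le (ln (x / y))). rewrite exp_ln in H by (apply Rdiv_lt_0_compat; lra).
    assert (x / y - 1 = (x - y) / y) by (field; lra).
    assert ((x - y) / y <= (x - y) / d)
      by (unfold Rdiv; apply Rmult_le_compat_l; [lra | apply Rinv_le_contravar; lra]).
    lra. }
  intros Hd Ha Hb. destruct (Rle_or_lt b a).
  - assert (ln b <= ln a) by (destruct (Req_dec a b); [subst; lra | left; apply ln_increasing; lra]).
    rewrite !Rabs_right by lra. apply Key; auto.
  - assert (ln a < ln b) by (apply ln_increasing; lra).
    rewrite !Rabs_left by lra. assert (Hba := Key b a Hd Ha ltac:(lra)). lra.
Qed.

Lemma logk_lip : lip_off_origin logk.
Proof.
  intros d Hd. exists (/ d). split; [left; apply Rinv_0_lt_compat; auto|].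
  intros w w' Hw Hw'. eapply Rle_trans; [apply (ln_lipschitz_ge _ _ d); auto|].
  unfold Rdiv. rewrite Rmult_comm. apply Rmult_le_compat_l; [left; apply Rinv_0_lt_compat; auto|].
  apply pnorm_rev_triang.
Qed.

Lemma abs_le_of_sum_sq a b X : 0 <= X -> a * a + b * b = X * X -> Rabs a <= X /\ Rabs b <= X.
Proof.
  intros HX H. rewrite <- (Rabs_right X) by lra.
  split; apply Rsqr_le_abs_0; unfold Rsqr; nra.
Qed.

Lemma lip_off_origin_pair (k k' : pt -> R) (M : R -> R) :
  (forall d, 0 < d -> 0 <= M d) ->
  (forall d w w', 0 < d -> d <= pnorm w -> d <= pnorm w' -> exists X, 0 <= X <= M d * pnorm (psub w w') /\
     (k w - k w') * (k w - k w') + (k' w - k' w') * (k' w - k' w') = X * X) ->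
  lip_off_origin k /\ lip_off_origin k'.
Proof.
  intros HM H. split; intros d Hd; exists (M d); split; auto; intros w w' Hw Hw';
    destruct (H d w w' Hd Hw Hw') as [X [HX E]]; destruct (abs_le_of_sum_sq _ _ X ltac:(lra) E); lra.
Qed.

Lemma logk_x_y_lip : lip_off_origin logk_x /\ lip_off_origin logk_y.
Proof.
  apply (lip_off_origin_pair _ _ (fun d => / (d * d))); [intros; left; apply Rinv_0_lt_compat; nra|].
  intros d w w' Hd Hw Hw'.
  assert (Hn := nsq_pos_of_pnorm w d Hd Hw). assert (Hn' := nsq_pos_of_pnorm w' d Hd Hw').
  assert (Hp := pnorm_ge0 (psub w w')).
  exists (pnorm (psub w w') / (pnorm w * pnorm w')). split; [split|].
  - apply Rmult_le_pos; [auto | left; apply Rinv_0_lt_compat; nra].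
  - unfold Rdiv. rewrite Rmult_comm. apply Rmult_le_compat_r; auto.
    apply Rinv_le_contravar; [nra | apply Rmult_le_compat; lra].
  - transitivity (nsq (psub w w') / (nsq w * nsq w')).
    + destruct w, w'. unfold logk_x, logk_y, nsq, psub in *; simpl in *. field. lra.
    + rewrite <- (pnorm_sq (psub w w')), <- (pnorm_sq w), <- (pnorm_sq w'). field.
      rewrite <- !pnorm_sq in Hn, Hn'. split; intros E; rewrite E in *; lra.
Qed.

Lemma logk_xx_xy_lip : lip_off_origin logk_xx /\ lip_off_origin logk_xy.
Proof.
  apply (lip_off_origin_pair _ _ (fun d => 2 / (d * d * d)));
    [intros; left; apply Rdiv_lt_0_compat; [lra | repeat apply Rmult_lt_0_compat; auto]|].
  intros d w w' Hd Hw Hw'.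
  assert (Hn := nsq_pos_of_pnorm w d Hd Hw). assert (Hn' := nsq_pos_of_pnorm w' d Hd Hw').
  set (nw := pnorm w) in *. set (nw' := pnorm w') in *.
  assert (Hp := pnorm_ge0 (psub w w')). assert (Ha := pnorm_ge0 (padd w w')).
  assert (Hpa := pnorm_padd w w'). fold nw nw' in Hpa.
  assert (Hden : 0 < nw * nw * (nw' * nw')) by (repeat apply Rmult_lt_0_compat; lra).
  exists (pnorm (psub w w') * pnorm (padd w w') / (nw * nw * (nw' * nw'))). split; [split|].
  - apply Rmult_le_pos; [nra | left; apply Rinv_0_lt_compat; auto].
  - assert (H1 : pnorm (padd w w') / (nw * nw * (nw' * nw')) <= 2 / (d * d * d)).
    { apply Rle_trans with ((nw + nw') / (nw * nw * (nw' * nw'))).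
      { unfold Rdiv. apply Rmult_le_compat_r; [left; apply Rinv_0_lt_compat|]; auto. }
      replace ((nw + nw') / (nw * nw * (nw' * nw'))) with (/ (nw * nw' * nw') + / (nw * nw * nw'))
        by (field; split; lra).
      replace (2 / (d * d * d)) with (/ (d * d * d) + / (d * d * d)) by (field; lra).
      assert (Hd3 : 0 < d * d * d) by (repeat apply Rmult_lt_0_compat; lra).
      apply Rplus_le_compat; apply Rinv_le_contravar; auto;
        repeat apply Rmult_le_compat; nra. }
    replace (pnorm (psub w w') * pnorm (padd w w') / (nw * nw * (nw' * nw'))) with
      (pnorm (padd w w') / (nw * nw * (nw' * nw')) * pnorm (psub w w')) by (field; split; lra).
    apply Rmult_le_compat_r; auto.
  - transitivity (nsq (psub w w') * nsq (padd w w') / (nsq w * nsq w * (nsq w' * nsq w'))).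
    + destruct w, w'. unfold logk_xx, logk_xy, nsq, psub, padd in *; simpl in *. field. lra.
    + unfold nw, nw'. rewrite <- (pnorm_sq (psub w w')), <- (pnorm_sq (padd w w')), <- (pnorm_sq w),
        <- (pnorm_sq w'). field. unfold nw, nw' in *; split; lra.
Qed.

Lemma logk_yy_lip : lip_off_origin logk_yy.
Proof.
  intros d Hd. destruct (proj1 logk_xx_xy_lip d Hd) as [L [HL H]]. exists L. split; auto.
  intros w w' Hw Hw'. unfold logk_yy. rewrite <- Rabs_Ropp. replace (- (- logk_xx w - - logk_xx w')) with
    (logk_xx w - logk_xx w') by ring. auto.
Qed.

Module LogKernelDerivatives.
Import Coquelicot.Coquelicot.

Ltac derive_kernel :=
  apply is_derive_Reals; auto_derive; unfold Rminus in *;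
  [ repeat split; try lra; apply sqrt_lt_R0; lra
  | lazymatch goal with
    | |- context [sqrt ?X] =>
        assert (Hs : sqrt X * sqrt X = X) by (apply sqrt_sqrt; lra);
        assert (0 < sqrt X) by (apply sqrt_lt_R0; lra);
        set (s := sqrt X) in *; rewrite <- Hs; field; lra
    | _ => field; lra
    end ].

Lemma logk_dx p z : 0 < nsq (psub p z) ->
  derivable_pt_lim (fun t => logk (psub (t, snd p) z)) (fst p) (logk_x (psub p z)).
Proof. destruct p, z. unfold logk, logk_x, pnorm, nsq, psub; simpl. intros H. derive_kernel. Qed.
Lemma logk_dy p z : 0 < nsq (psub p z) ->
  derivable_pt_lim (fun t => logk (psub (fst p, t) z)) (snd p) (logk_y (psub p z)).
Proof. destruct p, z. unfold logk, logk_y, pnorm, nsq, psub; simpl. intros H. derive_kernel. Qed.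
Lemma logk_x_dx p z : 0 < nsq (psub p z) ->
  derivable_pt_lim (fun t => logk_x (psub (t, snd p) z)) (fst p) (logk_xx (psub p z)).
Proof. destruct p, z. unfold logk_x, logk_xx, nsq, psub; simpl. intros H. derive_kernel. Qed.
Lemma logk_x_dy p z : 0 < nsq (psub p z) ->
  derivable_pt_lim (fun t => logk_x (psub (fst p, t) z)) (snd p) (logk_xy (psub p z)).
Proof. destruct p, z. unfold logk_x, logk_xy, nsq, psub; simpl. intros H. derive_kernel. Qed.
Lemma logk_y_dx p z : 0 < nsq (psub p z) ->
  derivable_pt_lim (fun t => logk_y (psub (t, snd p) z)) (fst p) (logk_xy (psub p z)).
Proof. destruct p, z. unfold logk_y, logk_xy, nsq, psub; simpl. intros H. derive_kernel. Qed.
Lemma logk_y_dy p z : 0 < nsq (psub p z) ->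
  derivable_pt_lim (fun t => logk_y (psub (fst p, t) z)) (snd p) (logk_yy (psub p z)).
Proof. destruct p, z. unfold logk_y, logk_yy, logk_xx, nsq, psub; simpl. intros H. derive_kernel. Qed.

End LogKernelDerivatives.
Import LogKernelDerivatives.

Lemma derivable_pt_lim_plus_fun (f g : R -> R) lf lg x :
  derivable_pt_lim f x lf -> derivable_pt_lim g x lg ->
  derivable_pt_lim (fun t => f t + g t) x (lf + lg).
Proof. apply derivable_pt_lim_plus. Qed.

Lemma derivable_pt_lim_scal_fun (f : R -> R) a l x :
  derivable_pt_lim f x l -> derivable_pt_lim (fun t => a * f t) x (a * l).
Proof. apply derivable_pt_lim_scal. Qed.

Lemma derivable_pt_lim_lsum {A} (l : list A) (f : A -> R -> R) f' x :
  (forall a, In a l -> derivable_pt_lim (f a) x (f' a)) ->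
  derivable_pt_lim (fun t => lsum l (fun a => f a t)) x (lsum l f').
Proof.
  induction l as [|a l IH]; intros H; [apply derivable_pt_lim_const|].
  apply derivable_pt_lim_plus_fun; [apply H; simpl; auto|].
  apply IH. intros; apply H; simpl; auto.
Qed.

Lemma derivable_pt_lim_sum_f_R0 (g : nat -> R -> R) g' N x :
  (forall M, (M <= N)%nat -> derivable_pt_lim (g M) x (g' M)) ->
  derivable_pt_lim (fun t => sum_f_R0 (fun M => g M t) N) x (sum_f_R0 g' N).
Proof.
  induction N as [|N IH]; intros H; [apply H; auto|].
  apply derivable_pt_lim_plus_fun; [apply IH; intros; apply H|apply H]; lia.
Qed.

Lemma lipschitz_small_step L eps x : 0 <= L -> 0 < eps -> x <= eps / (L + 1) -> L * x < eps.
Proof.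
  intros HL He Hx. apply Rle_lt_trans with (L * (eps / (L + 1))).
  - destruct HL as [HL|<-]; [apply Rmult_le_compat_l; lra | lra].
  - replace (L * (eps / (L + 1))) with (eps - eps / (L + 1)) by (field; lra).
    assert (0 < eps / (L + 1)) by (apply Rdiv_lt_0_compat; lra). lra.
Qed.

Definition lipschitz_on (U : pt -> Prop) (f : pt -> R) :=
  exists C, 0 <= C /\ forall z z', U z -> U z' -> Rabs (f z - f z') <= C * pdist z z'.

Lemma lipschitz_on_const U a : lipschitz_on U (fun _ => a).
Proof. exists 0. split; [lra|]. intros. rewrite Rminus_diag, Rabs_R0. lra. Qed.

Lemma lipschitz_on_plus U f g :
  lipschitz_on U f -> lipschitz_on U g -> lipschitz_on U (fun z => f z + g z).
Proof.
  intros [C1 [H1 L1]] [C2 [H2 L2]]. exists (C1 + C2). split; [lra|]. intros z z' Hz Hz'.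
  replace (f z + g z - (f z' + g z')) with ((f z - f z') + (g z - g z')) by ring.
  eapply Rle_trans; [apply Rabs_triang|]. specialize (L1 z z' Hz Hz'). specialize (L2 z z' Hz Hz'). lra.
Qed.

Lemma lipschitz_on_scal U f a : lipschitz_on U f -> lipschitz_on U (fun z => a * f z).
Proof.
  intros [C [H L]]. exists (Rabs a * C). split; [apply Rmult_le_pos; auto; apply Rabs_pos|].
  intros z z' Hz Hz'. rewrite <- Rmult_minus_distr_l, Rabs_mult, Rmult_assoc.
  apply Rmult_le_compat_l; [apply Rabs_pos | auto].
Qed.

Lemma lipschitz_on_lsum {A} U (l : list A) (F : A -> pt -> R) :
  (forall a, In a l -> lipschitz_on U (F a)) -> lipschitz_on U (fun z => lsum l (fun a => F a z)).
Proof.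
  induction l as [|a l IH]; intros H; [apply (lipschitz_on_const U 0)|].
  apply (lipschitz_on_plus U (F a) (fun z => lsum l (fun a0 => F a0 z))); [apply H; simpl; auto|].
  apply IH. intros; apply H; simpl; auto.
Qed.

Lemma lipschitz_on_sum_f_R0 U (F : nat -> pt -> R) N :
  (forall M, (M <= N)%nat -> lipschitz_on U (F M)) ->
  lipschitz_on U (fun z => sum_f_R0 (fun M => F M z) N).
Proof.
  induction N as [|N IH]; intros H; [apply H; auto|].
  apply (lipschitz_on_plus U (fun z => sum_f_R0 (fun M => F M z) N) (F (S N)));
    [apply IH; intros; apply H | apply H]; lia.
Qed.

Lemma lipschitz_on_sub U V f : (forall z, V z -> U z) -> lipschitz_on U f -> lipschitz_on V f.
Proof. intros H [C [HC L]]. exists C. split; auto. Qed.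

Lemma cont_in_sub U V g p : (forall z, V z -> U z) -> cont_in U g p -> cont_in V g p.
Proof. intros HVU H eps He. destruct (H eps He) as [d [Hd Hq]]. exists d. split; auto. Qed.

Lemma cont_in_scal U g a p : cont_in U g p -> cont_in U (fun z => a * g z) p.
Proof.
  intros H eps He. assert (Ha := Rabs_pos a).
  destruct (H (eps / (Rabs a + 1))) as [d [Hd Hq]]; [apply Rdiv_lt_0_compat; lra|].
  exists d. split; auto. intros q Uq Dq. rewrite <- Rmult_minus_distr_l, Rabs_mult.
  apply lipschitz_small_step; auto. left. auto.
Qed.

Lemma cont_in_plus U f g p : cont_in U f p -> cont_in U g p -> cont_in U (fun z => f z + g z) p.
Proof.
  intros H1 H2 eps He. destruct (H1 (eps/2)) as [d1 [Hd1 Hq1]]; [lra|].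
  destruct (H2 (eps/2)) as [d2 [Hd2 Hq2]]; [lra|].
  exists (Rmin d1 d2). split; [apply Rmin_glb_lt; auto|]. intros q Uq Dq.
  assert (A1 := Hq1 q Uq (Rlt_le_trans _ _ _ Dq (Rmin_l _ _))).
  assert (A2 := Hq2 q Uq (Rlt_le_trans _ _ _ Dq (Rmin_r _ _))).
  replace (f q + g q - (f p + g p)) with ((f q - f p) + (g q - g p)) by ring.
  eapply Rle_lt_trans; [apply Rabs_triang | lra].
Qed.

Lemma lipschitz_on_cont_in U f p : lipschitz_on U f -> U p -> cont_in U f p.
Proof.
  intros [C [HC L]] Up eps He. exists (eps / (C + 1)). split; [apply Rdiv_lt_0_compat; lra|].
  intros q Uq Dq. eapply Rle_lt_trans; [apply L; auto|].
  apply lipschitz_small_step; auto. lra.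
Qed.

Lemma lip_off_origin_cont_in k z1 U p : lip_off_origin k -> (forall z, U z -> z <> z1) -> U p ->
  cont_in U (fun z => k (psub z z1)) p.
Proof.
  intros Hk HU Up. assert (Hp : 0 < pdist p z1) by (apply pdist_pos; auto).
  destruct (Hk (pdist p z1 / 2) ltac:(lra)) as [L [HL Hl]].
  intros eps He. exists (Rmin (pdist p z1 / 2) (eps / (L + 1))).
  split; [apply Rmin_glb_lt; [lra|apply Rdiv_lt_0_compat; lra]|].
  intros q Uq Dq. assert (D1 := Rlt_le_trans _ _ _ Dq (Rmin_l _ _)).
  assert (D2 := Rlt_le_trans _ _ _ Dq (Rmin_r _ _)).
  assert (Hq : pdist p z1 / 2 <= pnorm (psub q z1)).
  { change (pnorm (psub q z1)) with (pdist q z1). assert (H := pdist_triang p q z1).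
    rewrite pdist_sym in D1. lra. }
  assert (Hp' : pdist p z1 / 2 <= pnorm (psub p z1)) by (change (pnorm (psub p z1)) with (pdist p z1); lra).
  specialize (Hl _ _ Hq Hp'). rewrite pnorm_psub_psub_r in Hl.
  eapply Rle_lt_trans; [apply Hl|]. apply lipschitz_small_step; auto. lra.
Qed.

Lemma harmonic_on_sub U V f : (forall z, V z -> U z) -> harmonic_on U f -> harmonic_on V f.
Proof.
  intros HVU [fx [fy [fxx [fxy [fyx [fyy H]]]]]].
  exists fx, fy, fxx, fxy, fyx, fyy. intros p Vp.
  destruct (H p (HVU p Vp)) as (A1 & A2 & A3 & A4 & A5 & A6 & C1 & C2 & C3 & C4 & E).
  repeat split; auto; eapply cont_in_sub; eauto.
Qed.

Lemma harmonic_on_plus U f g :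
  harmonic_on U f -> harmonic_on U g -> harmonic_on U (fun z => f z + g z).
Proof.
  intros [fx [fy [fxx [fxy [fyx [fyy H]]]]]] [gx [gy [gxx [gxy [gyx [gyy G]]]]]].
  exists (fun z => fx z + gx z), (fun z => fy z + gy z), (fun z => fxx z + gxx z),
    (fun z => fxy z + gxy z), (fun z => fyx z + gyx z), (fun z => fyy z + gyy z).
  intros p Up. destruct (H p Up) as (A1 & A2 & A3 & A4 & A5 & A6 & C1 & C2 & C3 & C4 & E).
  destruct (G p Up) as (B1 & B2 & B3 & B4 & B5 & B6 & D1 & D2 & D3 & D4 & F).
  repeat split; try (apply derivable_pt_lim_plus_fun; auto); try (apply cont_in_plus; auto). lra.
Qed.

Lemma harmonic_on_scal U f a : harmonic_on U f -> harmonic_on U (fun z => a * f z).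
Proof.
  intros [fx [fy [fxx [fxy [fyx [fyy H]]]]]].
  exists (fun z => a * fx z), (fun z => a * fy z), (fun z => a * fxx z),
    (fun z => a * fxy z), (fun z => a * fyx z), (fun z => a * fyy z).
  intros p Up. destruct (H p Up) as (A1 & A2 & A3 & A4 & A5 & A6 & C1 & C2 & C3 & C4 & E).
  repeat split; try (apply derivable_pt_lim_scal_fun; auto); try (apply cont_in_scal; auto).
  rewrite <- Rmult_plus_distr_l, E. ring.
Qed.

Lemma harmonic_on_ext U f g : (forall z, f z = g z) -> harmonic_on U f -> harmonic_on U g.
Proof. intros E H. replace g with f by (apply functional_extensionality; auto). exact H. Qed.

Lemma harmonic_logk U z1 : (forall z, U z -> z <> z1) -> harmonic_on U (fun z => logk (psub z z1)).
Proof.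
  intros HU.
  exists (fun z => logk_x (psub z z1)), (fun z => logk_y (psub z z1)), (fun z => logk_xx (psub z z1)),
    (fun z => logk_xy (psub z z1)), (fun z => logk_xy (psub z z1)), (fun z => logk_yy (psub z z1)).
  intros p Up. assert (Hn : 0 < nsq (psub p z1)) by (apply nsq_psub_pos, pdist_pos; auto).
  repeat split;
    [ apply logk_dx | apply logk_dy | apply logk_x_dx | apply logk_x_dy | apply logk_y_dx | apply logk_y_dy
    | apply lip_off_origin_cont_in | apply lip_off_origin_cont_in | apply lip_off_origin_cont_in
    | apply lip_off_origin_cont_in | ];
    auto; try apply logk_xx_xy_lip; try apply logk_yy_lip.
  unfold logk_yy. ring.
Qed.

Lemma unif_cv_on_sub U V h : (forall z, V z -> U z) -> unif_cv_on U h -> unif_cv_on V h.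
Proof.
  intros HVU [g Hg]. exists g. intros eps He. destruct (Hg eps He) as [N0 HN0]. exists N0. auto.
Qed.

(** * The reflected series *)

Lemma fold_Rmax_ge_init a l : a <= fold_right Rmax a l.
Proof. induction l as [|x l IH]; simpl; [lra|]. eapply Rle_trans; [apply IH|apply Rmax_r]. Qed.

Lemma fold_Rmax_ge_in a l x : In x l -> x <= fold_right Rmax a l.
Proof.
  induction l as [|y l IH]; simpl; [tauto|].
  intros [->|H]; [apply Rmax_l | eapply Rle_trans; [apply IH; auto|apply Rmax_r]].
Qed.

Lemma finite_pos_lower_bound (f : nat -> R) n : (forall i, (i < n)%nat -> 0 < f i) ->
  exists d, 0 < d /\ forall i, (i < n)%nat -> d <= f i.
Proof.
  induction n as [|n IH]; intros H; [exists 1; split; [lra|intros; lia]|].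
  destruct IH as [d [Hd Hdi]]; [intros; apply H; lia|].
  exists (Rmin d (f n)). split; [apply Rmin_glb_lt; auto|].
  intros i Hi. destruct (Nat.eq_dec i n) as [->|Hin]; [apply Rmin_r|].
  eapply Rle_trans; [apply Rmin_l | apply Hdi; lia].
Qed.

Section ExteriorSeries.

Variable K : nat.
Variable c : nat -> pt.
Variable r : nat -> R.
Variable z0 : pt.
Hypothesis HK : (2 <= K)%nat.
Hypothesis Hr : forall j, (j < K)%nat -> r j > 0.
Hypothesis Hdisj : forall i j, (i < K)%nat -> (j < K)%nat -> i <> j -> pdist (c i) (c j) > r i + r j.
Hypothesis Hz0 : Dom K c r z0.
Hypothesis HP : (INR K - 1) * P_max K c r z0 ^ 2 < 1.

Let P := P_max K c r z0.
Let T i := inv_circle (c i) (r i).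
Let wp := word_point c r.

Lemma P_j_ge_z0 j : r j / pdist z0 (c j) <= P_j K c r z0 j.
Proof. apply fold_Rmax_ge_init. Qed.

Lemma P_j_ge_pair j l : (l < K)%nat -> l <> j -> r j / (pdist (c j) (c l) - r l) <= P_j K c r z0 j.
Proof.
  intros Hl Hlj. apply fold_Rmax_ge_in, in_map_iff. exists l. split; auto.
  apply filter_In. split; [apply in_seq; lia | apply Bool.negb_true_iff, Nat.eqb_neq; auto].
Qed.

Lemma P_j_le_P j : (j < K)%nat -> P_j K c r z0 j <= P.
Proof. intros Hj. apply fold_Rmax_ge_in, in_map_iff. exists j. split; auto. apply in_seq; lia. Qed.

Lemma P_pos : 0 < P.
Proof.
  assert (H0 : (0 < K)%nat) by lia. assert (Hd := Hz0 0%nat H0). assert (Hr0 := Hr 0%nat H0).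
  eapply Rlt_le_trans; [|apply (P_j_le_P 0 H0)]. eapply Rlt_le_trans; [|apply P_j_ge_z0].
  apply Rdiv_lt_0_compat; lra.
Qed.

Lemma INR_K_pos : 0 < INR K.
Proof. apply lt_0_INR. lia. Qed.

Lemma INR_K_minus_1_ge_1 : 1 <= INR K - 1.
Proof. assert (2 <= INR K) by (replace 2 with (INR 2) by (simpl; lra); apply le_INR; lia). lra. Qed.

Lemma P_lt_1 : P < 1.
Proof. assert (HK1 := INR_K_minus_1_ge_1). assert (HPp := P_pos). fold P in HP. assert (P ^ 2 < 1) by nra. nra. Qed.

Definition rho := (INR K - 1) * P ^ 2.

Lemma rho_bounds : 0 <= rho < 1.
Proof.
  split; [|exact HP]. apply Rmult_le_pos; [pose proof INR_K_minus_1_ge_1; lra | apply pow_le; left; apply P_pos].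
Qed.

Definition rsum := lsum (seq 0 K) r.

Lemma r_le_rsum m : (m < K)%nat -> r m <= rsum.
Proof.
  intros Hm. unfold rsum. rewrite <- (lsum_seq_indicator K m r Hm) at 1. apply lsum_le.
  intros i Hi. apply in_seq in Hi. destruct (Nat.eqb i m); [lra|]. assert (H := Hr i ltac:(lia)). lra.
Qed.

Lemma rsum_pos : 0 < rsum.
Proof. eapply Rlt_le_trans; [apply (Hr 0)|apply r_le_rsum]; lia. Qed.

(* The paper's disks of radius P r_j, into which every level-M point with first letter j falls. *)
Definition small_disk j x := pdist x (c j) <= r j * P.

(* Points from which the inversion T_i contracts by the factor P (the inversion multiplies
   distances by r_i^2 / (|x - c_i| |y - c_i|)). *)
Definition P_far i x := 0 < pdist x (c i) /\ r i / pdist x (c i) <= P.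

Lemma P_far_z0 i : (i < K)%nat -> P_far i z0.
Proof.
  intros Hi. assert (H := Hz0 i Hi). assert (Hri := Hr i Hi). split; [lra|].
  eapply Rle_trans; [apply P_j_ge_z0 | apply P_j_le_P; auto].
Qed.

Lemma P_far_of_small_disk i h x : (i < K)%nat -> (h < K)%nat -> h <> i -> small_disk h x -> P_far i x.
Proof.
  intros Hi Hh Hhi Hx. unfold small_disk in Hx.
  assert (Hd := Hdisj i h Hi Hh (not_eq_sym Hhi)). assert (Hri := Hr i Hi). assert (Hrh := Hr h Hh).
  assert (Htr := pdist_triang (c i) x (c h)). rewrite (pdist_sym (c i) x) in Htr.
  assert (HP1 := P_lt_1). assert (HP0 := P_pos).
  assert (Hlow : pdist (c i) (c h) - r h <= pdist x (c i)) by nra.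
  split; [lra|].
  eapply Rle_trans; [|eapply Rle_trans; [apply (P_j_ge_pair i h Hh Hhi) | apply P_j_le_P; auto]].
  apply Rmult_le_compat_l; [lra | apply Rinv_le_contravar; lra].
Qed.

Lemma inv_small_disk_of_P_far i x : (i < K)%nat -> P_far i x -> small_disk i (T i x).
Proof.
  intros Hi [H1 H2]. unfold small_disk, T. rewrite inv_circle_dist_center by auto.
  replace (r i * r i / pdist x (c i)) with (r i * (r i / pdist x (c i))) by (field; lra).
  apply Rmult_le_compat_l; [assert (H := Hr i Hi); lra | auto].
Qed.

Lemma inv_dist_of_P_far i x y : (i < K)%nat -> P_far i x -> P_far i y ->
  pdist (T i x) (T i y) <= P ^ 2 * pdist x y.
Proof.
  intros Hi [H1 H2] [H3 H4]. unfold T. rewrite inv_circle_dist by auto.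
  assert (0 <= pdist x y) by apply pdist_ge0. assert (Hri := Hr i Hi).
  replace (r i * r i * pdist x y / (pdist x (c i) * pdist y (c i))) with
    ((r i / pdist x (c i)) * (r i / pdist y (c i)) * pdist x y) by (field; lra).
  apply Rmult_le_compat_r; auto. simpl. rewrite Rmult_1_r.
  apply Rmult_le_compat; auto; apply Rlt_le, Rdiv_lt_0_compat; lra.
Qed.

Lemma small_disk_dist h a b : (h < K)%nat -> small_disk h a -> small_disk h b -> pdist a b <= 2 * rsum.
Proof.
  intros Hh Ha Hb. unfold small_disk in *. assert (H := pdist_triang a (c h) b).
  rewrite (pdist_sym (c h) b) in H.
  assert (H1 := r_le_rsum h Hh). assert (H2 := P_lt_1). assert (H3 := P_pos). assert (H4 := Hr h Hh). nra.
Qed.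

Lemma wp_cons x i w : wp x (i :: w) = T i (wp x w).
Proof. reflexivity. Qed.

Definition first_letter (j : nat) (v : list nat) : nat := match v with [] => j | i :: _ => i end.

Lemma word_point_small_disk w : admissible K w -> w <> [] -> small_disk (first_letter 0 w) (wp z0 w).
Proof.
  induction w as [|i w IH]; intros Hv Hne; [congruence|].
  destruct Hv as [HF HC]. inversion HF as [|? ? Hi HF']; subst. simpl first_letter. rewrite wp_cons.
  apply inv_small_disk_of_P_far; auto. destruct w as [|h w]; [apply P_far_z0; auto|].
  destruct HC as [Hih HC]. inversion HF'; subst.
  apply (P_far_of_small_disk i h); auto. apply IH; [split; auto | discriminate].
Qed.

Lemma word_contraction v : admissible K v -> forall j a b, (j < K)%nat ->
  small_disk j a -> small_disk j b -> can_append j v = true ->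
  pdist (wp a v) (wp b v) <= P ^ (2 * length v) * pdist a b /\
  small_disk (first_letter j v) (wp a v) /\ small_disk (first_letter j v) (wp b v) /\
  (first_letter j v < K)%nat.
Proof.
  induction v as [|i v IH]; intros Hv j a b Hj Ha Hb Hl.
  - simpl. rewrite Rmult_1_l. repeat split; auto. lra.
  - destruct Hv as [HF HC]. inversion HF as [|? ? Hi HF']; subst.
    assert (Hl' : can_append j v = true) by (destruct v; [reflexivity|exact Hl]).
    destruct (IH (conj HF' (alternating_tail _ _ HC)) j a b Hj Ha Hb Hl') as [Hd [Hia [Hib Hh]]].
    assert (Hneq : first_letter j v <> i).
    { destruct v as [|h v]; simpl.
      - simpl in Hl. intros ->. rewrite Nat.eqb_refl in Hl. discriminate.
      - destruct HC as [HC _]. auto. }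
    assert (Ga := P_far_of_small_disk i _ _ Hi Hh Hneq Hia).
    assert (Gb := P_far_of_small_disk i _ _ Hi Hh Hneq Hib).
    rewrite !wp_cons. simpl first_letter. repeat split; auto using inv_small_disk_of_P_far.
    eapply Rle_trans; [apply inv_dist_of_P_far; auto|].
    replace (2 * length (i :: v))%nat with (2 + 2 * length v)%nat by (simpl; lia).
    rewrite pow_add, Rmult_assoc. apply Rmult_le_compat_l; [apply pow_le; left; apply P_pos | auto].
Qed.

(* u and u ++ [k] differ only in the innermost letter: compare T_m z0 with T_m (T_k z0). *)
Lemma word_point_snoc_dist n u k : In u (words K (S n)) -> (k < K)%nat -> can_append k u = true ->
  pdist (wp z0 u) (wp z0 (u ++ [k])) <= P ^ (2 * n) * (2 * rsum).
Proof.
  intros Hu Hk Hl. destruct (words_admissible _ _ _ Hu) as [Hv Hlen].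
  destruct u as [|m u' _] using rev_ind; [discriminate|].
  rewrite length_app in Hlen. simpl in Hlen.
  destruct (admissible_snoc_inv _ _ _ Hv) as [Hv' [Hm Hl']].
  assert (Hkm : k <> m) by (intros ->; rewrite can_append_snoc, Nat.eqb_refl in Hl; discriminate).
  unfold wp. rewrite !word_point_snoc. fold wp.
  assert (Ga : small_disk m (T m z0)) by (apply inv_small_disk_of_P_far, P_far_z0; auto).
  assert (Gb : small_disk m (T m (T k z0))).
  { apply inv_small_disk_of_P_far; auto. apply (P_far_of_small_disk m k); auto.
    apply inv_small_disk_of_P_far, P_far_z0; auto. }
  destruct (word_contraction u' Hv' m _ _ Hm Ga Gb Hl') as [Hd _].
  eapply Rle_trans; [apply Hd|]. replace (length u') with n by lia.
  apply Rmult_le_compat_l; [apply pow_le; left; apply P_pos | apply (small_disk_dist m); auto].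
Qed.

Definition wlevel (chi : list nat -> R) (phi : pt -> R) M :=
  lsum (words K M) (fun w => chi w * phi (wp z0 w)).

Definition level phi M := wlevel (fun _ => 1) phi M.

Definition small_disk_lipschitz (phi : pt -> R) (L : R) :=
  forall h a b, (h < K)%nat -> small_disk h a -> small_disk h b -> Rabs (phi a - phi b) <= L * pdist a b.

(* Each word of length n+1 has K-1 admissible right extensions; pair them off. *)
Lemma level_defect_expand chi phi n :
  (forall u k, u <> [] -> chi (u ++ [k]) = chi u) ->
  (INR K - 1) * wlevel chi phi (S n) - wlevel chi phi (S (S n)) =
  lsum (words K (S n)) (fun u => lsum (seq 0 K) (fun k =>
    if can_append k u then chi u * (phi (wp z0 u) - phi (wp z0 (u ++ [k]))) else 0)).
Proof.
  intros Hchi. unfold wlevel. rewrite (lsum_words_S_snoc K (S n)), <- lsum_scal, <- lsum_minus.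
  apply lsum_ext_in. intros u Hu. assert (Hne := words_S_nonempty _ _ _ Hu).
  rewrite <- (lsum_can_append_const K u (chi u * phi (wp z0 u))) by (auto; apply (words_admissible _ _ _ Hu)).
  rewrite <- lsum_minus. apply lsum_ext_in. intros k _.
  destruct (can_append k u); [rewrite Hchi by auto; ring | ring].
Qed.

Lemma level_defect_bound chi phi L n :
  (forall u k, u <> [] -> chi (u ++ [k]) = chi u) -> (forall u, Rabs (chi u) <= 1) -> 0 <= L ->
  small_disk_lipschitz phi L ->
  Rabs ((INR K - 1) * wlevel chi phi (S n) - wlevel chi phi (S (S n))) <=
    INR K * (INR K - 1) ^ n * (INR K - 1) * (L * (P ^ (2 * n) * (2 * rsum))).
Proof.
  intros Hchi Hc1 HL Hphi. rewrite level_defect_expand by auto.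
  set (b := L * (P ^ (2 * n) * (2 * rsum))).
  assert (Hb : 0 <= b).
  { apply Rmult_le_pos; auto. apply Rmult_le_pos; [apply pow_le; left; apply P_pos | pose proof rsum_pos; lra]. }
  eapply Rle_trans; [apply lsum_abs|].
  apply Rle_trans with (lsum (words K (S n)) (fun _ => (INR K - 1) * b)).
  2: { rewrite lsum_const, length_words_S by lia. lra. }
  apply lsum_le. intros u Hu. destruct (words_admissible _ _ _ Hu) as [Hv _].
  assert (Hne := words_S_nonempty _ _ _ Hu).
  rewrite <- (lsum_can_append_const K u b Hv Hne).
  eapply Rle_trans; [apply lsum_abs|]. apply lsum_le. intros k Hk. apply in_seq in Hk.
  destruct (can_append k u) eqn:Hlk; [|rewrite Rabs_R0; lra].
  rewrite Rabs_mult. rewrite <- (Rmult_1_l b).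
  apply Rmult_le_compat; [apply Rabs_pos | apply Rabs_pos | apply Hc1|].
  assert (Hvk := admissible_snoc K u k Hv ltac:(lia) Hlk).
  assert (Hi1 := word_point_small_disk u Hv Hne).
  assert (Hi2 := word_point_small_disk (u ++ [k]) Hvk ltac:(destruct u; discriminate)).
  replace (first_letter 0 (u ++ [k])) with (first_letter 0 u) in Hi2 by (destruct u; [congruence|reflexivity]).
  assert (Hh : (first_letter 0 u < K)%nat) by (destruct u; [congruence | apply (admissible_head K _ u Hv)]).
  eapply Rle_trans; [apply (Hphi _ _ _ Hh Hi1 Hi2)|].
  apply Rmult_le_compat_l; auto. apply (word_point_snoc_dist n u k); auto. lia.
Qed.

(* The partial sums of psi^{s*}, with the factor -1/(2 pi) stripped off. *)
Definition series phi N :=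
  sum_f_R0 (fun M => (-1) ^ M * level phi M) N + (-1) ^ (S N) / INR K * level phi (S N).

(* The same without the level-0 term, which carries the pole at z0. *)
Definition series_reg phi N :=
  sum_f_R0 (fun M => if Nat.eqb M 0 then 0 else (-1) ^ M * level phi M) N
  + (-1) ^ (S N) / INR K * level phi (S N).

Lemma series_reg_step phi n : series_reg phi (S n) - series_reg phi n =
  (-1) ^ (S n) / INR K * ((INR K - 1) * level phi (S n) - level phi (S (S n))).
Proof.
  unfold series_reg. simpl sum_f_R0 at 1. replace (Nat.eqb (S n) 0) with false by reflexivity.
  assert (H := INR_K_pos). simpl pow. field. lra.
Qed.

Lemma sign_over_K_abs n : Rabs ((-1) ^ n / INR K) = / INR K.
Proof.
  unfold Rdiv. rewrite Rabs_mult, pow_1_abs, Rabs_inv, Rabs_right; [ring | left; apply INR_K_pos].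
Qed.

Lemma level_defect_rho chi phi L n :
  (forall u k, u <> [] -> chi (u ++ [k]) = chi u) -> (forall u, Rabs (chi u) <= 1) -> 0 <= L ->
  small_disk_lipschitz phi L ->
  / INR K * Rabs ((INR K - 1) * wlevel chi phi (S n) - wlevel chi phi (S (S n))) <=
  (INR K - 1) * (L * (2 * rsum)) * rho ^ n.
Proof.
  intros Hchi Hc1 HL Hphi. assert (HK0 := INR_K_pos).
  eapply Rle_trans.
  { apply Rmult_le_compat_l; [left; apply Rinv_0_lt_compat; auto | apply level_defect_bound; eauto]. }
  unfold rho. rewrite pow_mult, Rpow_mult_distr. right. field. lra.
Qed.

Lemma series_reg_cauchy phi L m n : 0 <= L -> small_disk_lipschitz phi L -> (n <= m)%nat ->
  Rabs (series_reg phi m - series_reg phi n) <= (INR K - 1) * (L * (2 * rsum)) / (1 - rho) * rho ^ n.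
Proof.
  intros HL Hphi Hnm. set (C := (INR K - 1) * (L * (2 * rsum))).
  assert (Hq := rho_bounds).
  assert (HC : 0 <= C) by (assert (H := INR_K_minus_1_ge_1); assert (H' := rsum_pos); unfold C; apply Rmult_le_pos; nra).
  assert (Hstep : forall k, Rabs (series_reg phi (S k) - series_reg phi k) <= C * rho ^ k).
  { intros k. rewrite series_reg_step, Rabs_mult, sign_over_K_abs.
    apply (level_defect_rho (fun _ => 1)); auto. intros; rewrite Rabs_R1; lra. }
  assert (Hs : Rabs (series_reg phi m - series_reg phi n) <= C * (rho ^ n - rho ^ m) / (1 - rho)).
  { induction Hnm as [|m Hnm IH].
    - rewrite !Rminus_diag, Rabs_R0. unfold Rdiv. rewrite Rmult_0_r, Rmult_0_l. lra.
    - replace (series_reg phi (S m) - series_reg phi n) with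
        ((series_reg phi (S m) - series_reg phi m) + (series_reg phi m - series_reg phi n)) by ring.
      eapply Rle_trans; [apply Rabs_triang|]. assert (H1 := Hstep m).
      replace (C * (rho ^ n - rho ^ S m) / (1 - rho)) with (C * rho ^ m + C * (rho ^ n - rho ^ m) / (1 - rho))
        by (simpl; field; lra).
      lra. }
  eapply Rle_trans; [apply Hs|]. assert (0 <= rho ^ m) by (apply pow_le; lra).
  unfold Rdiv. rewrite (Rmult_comm (C * / (1 - rho))), <- Rmult_assoc, (Rmult_comm (rho ^ n)).
  apply Rmult_le_compat_r; [left; apply Rinv_0_lt_compat; lra | apply Rmult_le_compat_l; lra].
Qed.

Definition closed_exterior z := forall j, (j < K)%nat -> r j <= pdist z (c j).

Lemma Dom_closed_exterior z : Dom K c r z -> closed_exterior z.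
Proof. intros H j Hj. left. apply H; auto. Qed.

Lemma closed_exterior_far : exists d, 0 < d /\
  forall z h a, closed_exterior z -> (h < K)%nat -> small_disk h a -> d <= pdist z a.
Proof.
  destruct (finite_pos_lower_bound (fun h => r h * (1 - P)) K) as [d [Hd Hdh]].
  { intros i Hi. assert (H := Hr i Hi). assert (H1 := P_lt_1). nra. }
  exists d. split; auto. intros z h a Hz Hh Ha. unfold small_disk in Ha.
  assert (H := pdist_triang z a (c h)). assert (H1 := Hz h Hh). assert (H2 := Hdh h Hh). lra.
Qed.

Lemma closed_exterior_far_words : exists d, 0 < d /\
  forall z w, closed_exterior z -> admissible K w -> w <> [] -> d <= pdist z (wp z0 w).
Proof.
  destruct closed_exterior_far as [d [Hd Hfar]]. exists d. split; auto. intros z w Hz Hv Hne.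
  apply (Hfar z (first_letter 0 w)); [auto | | apply word_point_small_disk; auto].
  destruct w; [congruence | apply (admissible_head K _ w Hv)].
Qed.

Lemma word_point_off_closed_exterior z M w : closed_exterior z -> In w (words K (S M)) ->
  0 < nsq (psub z (wp z0 w)).
Proof.
  intros Hz Hw. destruct closed_exterior_far_words as [d [Hd Hfar]]. apply nsq_psub_pos.
  eapply Rlt_le_trans; [apply Hd|]. apply Hfar; auto.
  - apply (words_admissible _ _ _ Hw).
  - apply (words_S_nonempty _ _ _ Hw).
Qed.

Definition kernel_at (k : pt -> R) (z : pt) := fun zeta => k (psub z zeta).

Lemma kernel_at_small_disk_lipschitz k : lip_off_origin k ->
  exists L, 0 <= L /\ forall z, closed_exterior z -> small_disk_lipschitz (kernel_at k z) L.
Proof.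
  intros Hk. destruct closed_exterior_far as [d [Hd Hfar]]. destruct (Hk d Hd) as [L [HL H]].
  exists L. split; auto. intros z Hz h a b Hh Ha Hb. unfold kernel_at.
  rewrite <- (pnorm_psub_psub z). apply H; apply (Hfar z h); auto.
Qed.

Definition kernel_series k n z := series_reg (kernel_at k z) n.

Definition kernel_limit k G :=
  exists C, forall z, closed_exterior z -> forall n, Rabs (kernel_series k n z - G z) <= C * rho ^ n.

Lemma kernel_series_converges k : lip_off_origin k -> exists G, kernel_limit k G.
Proof.
  intros Hk. destruct (kernel_at_small_disk_lipschitz k Hk) as [L [HL HLip]].
  set (C := (INR K - 1) * (L * (2 * rsum)) / (1 - rho)).
  destruct (uniform_limit_of_geometric_cauchy closed_exterior (fun n z => kernel_series k n z) C rho rho_bounds)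
    as [G HG].
  - intros z m n Hz Hnm. apply (series_reg_cauchy _ L); auto.
  - exists G, C. exact HG.
Qed.

Lemma kernel_series_derivable k k' N sl t0 : closed_exterior (sl t0) ->
  (forall zeta, 0 < nsq (psub (sl t0) zeta) ->
     derivable_pt_lim (fun t => k (psub (sl t) zeta)) t0 (k' (psub (sl t0) zeta))) ->
  derivable_pt_lim (fun t => kernel_series k N (sl t)) t0 (kernel_series k' N (sl t0)).
Proof.
  intros Hz Hk. unfold kernel_series, series_reg, level, wlevel, kernel_at.
  assert (Hlevel : forall M, derivable_pt_lim (fun t => lsum (words K (S M)) (fun w => 1 * k (psub (sl t) (wp z0 w))))
            t0 (lsum (words K (S M)) (fun w => 1 * k' (psub (sl t0) (wp z0 w))))).
  { intros M. apply (derivable_pt_lim_lsum _ (fun w t => 1 * k (psub (sl t) (wp z0 w)))).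
    intros w Hw. apply derivable_pt_lim_scal_fun, Hk. apply (word_point_off_closed_exterior _ M); auto. }
  apply derivable_pt_lim_plus_fun; [|apply derivable_pt_lim_scal_fun, Hlevel].
  apply (derivable_pt_lim_sum_f_R0
    (fun M t => if Nat.eqb M 0 then 0 else (-1) ^ M * lsum (words K M) (fun w => 1 * k (psub (sl t) (wp z0 w))))).
  intros [|M] _; [apply derivable_pt_lim_const|]. apply derivable_pt_lim_scal_fun, Hlevel.
Qed.

Lemma kernel_series_lipschitz k N : lip_off_origin k -> lipschitz_on closed_exterior (kernel_series k N).
Proof.
  intros Hk. destruct closed_exterior_far_words as [d [Hd Hfar]]. destruct (Hk d Hd) as [L [HL Hl]].
  assert (Hlevel : forall M, lipschitz_on closed_exterior
            (fun z => lsum (words K (S M)) (fun w => 1 * k (psub z (wp z0 w))))).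
  { intros M. apply (lipschitz_on_lsum closed_exterior _ (fun w z => 1 * k (psub z (wp z0 w)))).
    intros w Hw. apply lipschitz_on_scal. exists L. split; auto. intros z z' Hz Hz'.
    rewrite <- (pnorm_psub_psub_r z z' (wp z0 w)). destruct (words_admissible _ _ _ Hw) as [Hv _].
    assert (Hne := words_S_nonempty _ _ _ Hw). apply Hl; apply Hfar; auto. }
  unfold kernel_series, series_reg, level, wlevel, kernel_at.
  apply lipschitz_on_plus; [|apply lipschitz_on_scal, Hlevel].
  apply (lipschitz_on_sum_f_R0 closed_exterior
    (fun M z => if Nat.eqb M 0 then 0 else (-1) ^ M * lsum (words K M) (fun w => 1 * k (psub z (wp z0 w))))).
  intros [|M] _; [apply (lipschitz_on_const _ 0)|]. apply lipschitz_on_scal, Hlevel.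
Qed.

Lemma series_reg_opp phi psi n : (forall z, psi z = - phi z) -> series_reg psi n = - series_reg phi n.
Proof.
  intros E. unfold series_reg, level, wlevel.
  assert (EL : forall M, lsum (words K M) (fun w => 1 * psi (wp z0 w)) = - lsum (words K M) (fun w => 1 * phi (wp z0 w))).
  { intros M. rewrite <- lsum_opp. apply lsum_ext_in. intros w _. rewrite E. ring. }
  assert (ES : forall N, sum_f_R0 (fun M => if Nat.eqb M 0 then 0 else (-1) ^ M * lsum (words K M) (fun w => 1 * psi (wp z0 w))) N =
     - sum_f_R0 (fun M => if Nat.eqb M 0 then 0 else (-1) ^ M * lsum (words K M) (fun w => 1 * phi (wp z0 w))) N).
  { induction N as [|N IH]; [simpl; ring|]. rewrite !tech5, IH. cbv beta.
    replace (Nat.eqb (S N) 0) with false by reflexivity. rewrite EL. ring. }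
  rewrite ES, EL. ring.
Qed.

Lemma kernel_series_laplacian n z : kernel_series logk_xx n z + kernel_series logk_yy n z = 0.
Proof. unfold kernel_series. rewrite (series_reg_opp (kernel_at logk_xx z) (kernel_at logk_yy z)); [ring|reflexivity]. Qed.

Lemma Dom_open p : Dom K c r p -> exists d, 0 < d /\ forall q, pdist q p < d -> Dom K c r q.
Proof.
  intros Hp. destruct (finite_pos_lower_bound (fun j => pdist p (c j) - r j) K) as [d [Hd Hdj]].
  { intros i Hi. assert (H := Hp i Hi). lra. }
  exists d. split; auto. intros q Hq j Hj. assert (H := Hdj j Hj).
  assert (T1 := pdist_triang p q (c j)). rewrite (pdist_sym p q) in T1. unfold gt. lra.
Qed.

Definition isometric_line (sl : R -> pt) := forall t t', pdist (sl t) (sl t') = Rabs (t - t').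

Lemma isometric_line_x y : isometric_line (fun t => (t, y)).
Proof.
  intros t t'. unfold pdist, nsq, psub; simpl. rewrite Rminus_diag, Rmult_0_r, Rplus_0_r.
  apply sqrt_Rsqr_abs.
Qed.

Lemma isometric_line_y x : isometric_line (fun t => (x, t)).
Proof.
  intros t t'. unfold pdist, nsq, psub; simpl. rewrite Rminus_diag, Rmult_0_r, Rplus_0_l.
  apply sqrt_Rsqr_abs.
Qed.

(* Term-by-term differentiation, justified by uniform convergence near the point. *)
Lemma kernel_limit_derivable k k' G G' sl t0 :
  kernel_limit k G -> kernel_limit k' G' -> isometric_line sl -> Dom K c r (sl t0) ->
  (forall t zeta, 0 < nsq (psub (sl t) zeta) ->
     derivable_pt_lim (fun u => k (psub (sl u) zeta)) t (k' (psub (sl t) zeta))) ->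
  derivable_pt_lim (fun t => G (sl t)) t0 (G' (sl t0)).
Proof.
  intros [C HC] [C' HC'] Hsl Hp Hk. destruct (Dom_open _ Hp) as [d [Hd Hball]].
  set (dd := mkposreal d Hd).
  assert (HB : forall t, Boule t0 dd t -> closed_exterior (sl t))
    by (intros t Ht; apply Dom_closed_exterior, Hball; rewrite Hsl; exact Ht).
  apply (CVU_derivable (fun n t => kernel_series k n (sl t)) (fun n t => kernel_series k' n (sl t))
           (fun t => G (sl t)) (fun t => G' (sl t)) t0 dd).
  - intros eps He. destruct (geometric_eventually_lt C' rho eps rho_bounds He) as [N HN]. exists N.
    intros n y Hn Hy. rewrite Rabs_minus_sym. eapply Rle_lt_trans; [apply HC'; auto | apply HN; lia].
  - intros x Hx eps He. destruct (geometric_eventually_lt C rho eps rho_bounds He) as [N HN]. exists N.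
    intros n Hn. unfold R_dist. eapply Rle_lt_trans; [apply HC; auto | apply HN; lia].
  - intros n x Hx. apply (kernel_series_derivable k k' n sl x); auto.
  - unfold Boule. simpl. rewrite Rminus_diag, Rabs_R0. auto.
Qed.

Lemma kernel_limit_cont_in k G U p : lip_off_origin k -> kernel_limit k G ->
  (forall z, U z -> closed_exterior z) -> U p -> cont_in U G p.
Proof.
  intros Hk [C HC] HU Up eps He.
  destruct (geometric_eventually_lt C rho (eps / 3) rho_bounds ltac:(lra)) as [N HN].
  destruct (kernel_series_lipschitz k N Hk) as [L [HL Hl]].
  exists (eps / 3 / (L + 1)). split; [apply Rdiv_lt_0_compat; lra|].
  intros q Uq Dq.
  assert (A1 := HC q (HU q Uq) N). assert (A2 := HC p (HU p Up) N).
  assert (A3 := Hl q p (HU q Uq) (HU p Up)). assert (A4 := HN N (le_n N)).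
  assert (A5 : L * pdist q p < eps / 3) by (apply lipschitz_small_step; lra).
  replace (G q - G p) with ((G q - kernel_series k N q) + (kernel_series k N q - kernel_series k N p)
                            + (kernel_series k N p - G p)) by ring.
  eapply Rle_lt_trans; [apply Rabs_triang|]. eapply Rle_lt_trans; [apply Rplus_le_compat_r, Rabs_triang|].
  rewrite Rabs_minus_sym in A1. lra.
Qed.

Lemma kernel_limit_laplacian G3 G5 z : kernel_limit logk_xx G3 -> kernel_limit logk_yy G5 ->
  closed_exterior z -> G3 z + G5 z = 0.
Proof.
  intros [C3 H3] [C5 H5] Hz. apply (eq_0_of_le_geometric _ (C3 + C5) rho rho_bounds). intros n.
  assert (A := H3 z Hz n). assert (B := H5 z Hz n). assert (S0 := kernel_series_laplacian n z).
  replace (G3 z + G5 z) with (- ((kernel_series logk_xx n z - G3 z) + (kernel_series logk_yy n z - G5 z))) by lra.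
  rewrite Rabs_Ropp. eapply Rle_trans; [apply Rabs_triang | lra].
Qed.

Lemma harmonic_kernel_series N : harmonic_on (Dom K c r) (kernel_series logk N).
Proof.
  exists (kernel_series logk_x N), (kernel_series logk_y N), (kernel_series logk_xx N),
    (kernel_series logk_xy N), (kernel_series logk_xy N), (kernel_series logk_yy N).
  intros [x y] Hp. assert (He := Dom_closed_exterior _ Hp).
  assert (Hcont : forall k, lip_off_origin k -> cont_in (Dom K c r) (kernel_series k N) (x, y)).
  { intros k Hk. apply lipschitz_on_cont_in; auto.
    apply (lipschitz_on_sub closed_exterior); [apply Dom_closed_exterior | apply kernel_series_lipschitz, Hk]. }
  repeat split;
    [ apply (kernel_series_derivable _ _ _ (fun t => (t, y))); auto; intros; apply (logk_dx (x, y))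
    | apply (kernel_series_derivable _ _ _ (fun t => (x, t))); auto; intros; apply (logk_dy (x, y))
    | apply (kernel_series_derivable _ _ _ (fun t => (t, y))); auto; intros; apply (logk_x_dx (x, y))
    | apply (kernel_series_derivable _ _ _ (fun t => (x, t))); auto; intros; apply (logk_x_dy (x, y))
    | apply (kernel_series_derivable _ _ _ (fun t => (t, y))); auto; intros; apply (logk_y_dx (x, y))
    | apply (kernel_series_derivable _ _ _ (fun t => (x, t))); auto; intros; apply (logk_y_dy (x, y))
    | apply Hcont, logk_xx_xy_lip | apply Hcont, logk_xx_xy_lip | apply Hcont, logk_xx_xy_lip
    | apply Hcont, logk_yy_lip | apply kernel_series_laplacian ]; auto.
Qed.

Lemma harmonic_kernel_limit G0 : kernel_limit logk G0 -> harmonic_on (Dom K c r) G0.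
Proof.
  intros U0.
  destruct (kernel_series_converges logk_x (proj1 logk_x_y_lip)) as [G1 U1].
  destruct (kernel_series_converges logk_y (proj2 logk_x_y_lip)) as [G2 U2].
  destruct (kernel_series_converges logk_xx (proj1 logk_xx_xy_lip)) as [G3 U3].
  destruct (kernel_series_converges logk_xy (proj2 logk_xx_xy_lip)) as [G4 U4].
  destruct (kernel_series_converges logk_yy logk_yy_lip) as [G5 U5].
  exists G1, G2, G3, G4, G4, G5. intros [x y] Hp.
  assert (Sx := isometric_line_x y). assert (Sy := isometric_line_y x).
  repeat split;
    [ apply (kernel_limit_derivable logk logk_x G0 G1 (fun t => (t, y)) x); auto; intros; apply (logk_dx (_, y))
    | apply (kernel_limit_derivable logk logk_y G0 G2 (fun t => (x, t)) y); auto; intros; apply (logk_dy (x, _))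
    | apply (kernel_limit_derivable logk_x logk_xx G1 G3 (fun t => (t, y)) x); auto; intros; apply (logk_x_dx (_, y))
    | apply (kernel_limit_derivable logk_x logk_xy G1 G4 (fun t => (x, t)) y); auto; intros; apply (logk_x_dy (x, _))
    | apply (kernel_limit_derivable logk_y logk_xy G2 G4 (fun t => (t, y)) x); auto; intros; apply (logk_y_dx (_, y))
    | apply (kernel_limit_derivable logk_y logk_yy G2 G5 (fun t => (x, t)) y); auto; intros; apply (logk_y_dy (x, _))
    | apply (kernel_limit_cont_in logk_xx) | apply (kernel_limit_cont_in logk_xy)
    | apply (kernel_limit_cont_in logk_xy) | apply (kernel_limit_cont_in logk_yy)
    | apply kernel_limit_laplacian ];
    auto using Dom_closed_exterior; try apply logk_xx_xy_lip; apply logk_yy_lip.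
Qed.

Lemma level_sum_level M z : level_sum K c r z0 M z = level (kernel_at logk z) M.
Proof.
  unfold level, wlevel, level_sum. apply lsum_ext_in. intros w _. rewrite Rmult_1_l. reflexivity.
Qed.

Lemma psi_s_star_series N z : psi_s_star K c r z0 N z = - / (2 * PI) * series (kernel_at logk z) N.
Proof.
  unfold psi_s_star, psi_s, series. rewrite tech5.
  rewrite (sum_eq _ (fun M => (-1) ^ M * level (kernel_at logk z) M)) by (intros; rewrite level_sum_level; reflexivity).
  rewrite level_sum_level. assert (H := INR_K_pos). assert (PI > 0) by apply PI_RGT_0. field. lra.
Qed.

Lemma series_split phi N : series phi N = series_reg phi N + phi z0.
Proof.
  unfold series, series_reg.
  assert (ES : forall N, sum_f_R0 (fun M => (-1) ^ M * level phi M) N =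
     sum_f_R0 (fun M => if Nat.eqb M 0 then 0 else (-1) ^ M * level phi M) N + phi z0).
  { induction N0 as [|N0 IH]; [unfold level, wlevel; simpl; unfold lsum; simpl; ring|].
    rewrite !tech5, IH. cbv beta. replace (Nat.eqb (S N0) 0) with false by reflexivity. ring. }
  rewrite ES. ring.
Qed.

Lemma psi_s_star_kernel_series N z :
  psi_s_star K c r z0 N z = - / (2 * PI) * (kernel_series logk N z + ln (pdist z z0)).
Proof. rewrite psi_s_star_series, series_split. reflexivity. Qed.

Lemma series_minus phi psi N : series (fun x => phi x - psi x) N = series phi N - series psi N.
Proof.
  assert (E : forall M, level (fun x => phi x - psi x) M = level phi M - level psi M)
    by (intros; unfold level, wlevel; rewrite <- lsum_minus; apply lsum_ext_in; intros; ring).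
  unfold series. rewrite E, (sum_eq _ (fun M => (-1) ^ M * level phi M - (-1) ^ M * level psi M))
    by (intros; rewrite E; ring).
  rewrite minus_sum. ring.
Qed.

Definition avoids_head (j : nat) (w : list nat) : R := if can_prepend j w then 1 else 0.

Lemma word_point_outside_disk j w : (j < K)%nat -> admissible K w -> can_prepend j w = true ->
  r j < pdist (wp z0 w) (c j).
Proof.
  intros Hj Hv Hh. destruct w as [|h w]; [apply Hz0; auto|].
  simpl in Hh. apply Bool.negb_true_iff, Nat.eqb_neq in Hh.
  assert (Hi := word_point_small_disk (h :: w) Hv ltac:(discriminate)). simpl first_letter in Hi.
  assert (H1 := admissible_head K h w Hv). unfold small_disk in Hi.
  assert (Hd := Hdisj j h Hj H1 Hh). assert (T1 := pdist_triang (c j) (wp z0 (h :: w)) (c h)).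
  rewrite (pdist_sym (c j) (wp z0 (h :: w))) in T1.
  assert (H4 := P_lt_1). assert (H5 := P_pos). assert (H6 := Hr h H1). nra.
Qed.

Definition log_ratio (z z' : pt) := fun zeta => ln (pdist z zeta) - ln (pdist z' zeta).

Lemma log_ratio_inv_circle j z z' zeta : (j < K)%nat -> pdist z (c j) = r j -> pdist z' (c j) = r j ->
  r j < pdist zeta (c j) -> log_ratio z z' (T j zeta) = log_ratio z z' zeta.
Proof.
  intros Hj Hz Hz' Hzeta. assert (Hrj := Hr j Hj).
  assert (Hpz : 0 < pdist z zeta) by (assert (H := pdist_triang zeta z (c j)); rewrite (pdist_sym zeta z) in H; lra).
  assert (Hpz' : 0 < pdist z' zeta) by (assert (H := pdist_triang zeta z' (c j)); rewrite (pdist_sym zeta z') in H; lra).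
  unfold log_ratio, T. rewrite !inv_circle_dist_on_circle by (auto; lra).
  unfold Rdiv. rewrite !ln_mult; try (apply Rinv_0_lt_compat); try (apply Rmult_lt_0_compat); lra.
Qed.

(* Words starting with j cancel against the words they were obtained from. *)
Lemma level_log_ratio_S j z z' M : (j < K)%nat -> pdist z (c j) = r j -> pdist z' (c j) = r j ->
  level (log_ratio z z') (S M) =
  wlevel (avoids_head j) (log_ratio z z') M + wlevel (avoids_head j) (log_ratio z z') (S M).
Proof.
  intros Hj Hz Hz'. unfold level, wlevel. rewrite !lsum_words_S, <- lsum_plus. apply lsum_ext_in. intros w Hw.
  destruct (words_admissible _ _ _ Hw) as [Hv _].
  rewrite (lsum_ext_in (seq 0 K) _
    (fun i => (if Nat.eqb i j then (if can_prepend i w then log_ratio z z' (wp z0 (i :: w)) else 0) else 0) +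
       (if can_prepend i w then avoids_head j (i :: w) * log_ratio z z' (wp z0 (i :: w)) else 0))).
  - rewrite lsum_plus, lsum_seq_indicator by auto. f_equal.
    unfold avoids_head. destruct (can_prepend j w) eqn:Hh; [|ring].
    rewrite wp_cons, log_ratio_inv_circle by (auto; apply word_point_outside_disk; auto). ring.
  - intros i _. unfold avoids_head. simpl can_prepend.
    destruct (Nat.eqb_spec i j) as [->|Hij]; [rewrite Nat.eqb_refl|];
      [|replace (Nat.eqb j i) with false by (symmetry; apply Nat.eqb_neq; auto)];
      destruct (can_prepend _ w); simpl; ring.
Qed.

Lemma series_log_ratio j z z' N : (j < K)%nat -> pdist z (c j) = r j -> pdist z' (c j) = r j ->
  series (log_ratio z z') N = (-1) ^ N / INR K *
    ((INR K - 1) * wlevel (avoids_head j) (log_ratio z z') N - wlevel (avoids_head j) (log_ratio z z') (S N)).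
Proof.
  intros Hj Hz Hz'. set (W := wlevel (avoids_head j) (log_ratio z z')).
  assert (ES : forall N, sum_f_R0 (fun M => (-1) ^ M * level (log_ratio z z') M) N = (-1) ^ N * W N).
  { induction N0 as [|N0 IH].
    - unfold W, level, wlevel. simpl. unfold lsum, avoids_head; simpl. ring.
    - rewrite tech5, IH, (level_log_ratio_S j) by auto. fold W. simpl pow. ring. }
  unfold series. rewrite ES, (level_log_ratio_S j) by auto. fold W. assert (H := INR_K_pos). simpl pow. field. lra.
Qed.

Lemma circle_closed_exterior j z : (j < K)%nat -> pdist z (c j) = r j -> closed_exterior z.
Proof.
  intros Hj Hz i Hi. destruct (Nat.eq_dec i j) as [->|Hij]; [lra|].
  assert (Hd := Hdisj i j Hi Hj Hij). assert (T1 := pdist_triang (c i) z (c j)).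
  rewrite (pdist_sym (c i) z) in T1. lra.
Qed.

Lemma series_log_ratio_bound j z z' : (j < K)%nat -> pdist z (c j) = r j -> pdist z' (c j) = r j ->
  exists C, forall n, Rabs (series (log_ratio z z') (S n)) <= C * rho ^ n.
Proof.
  intros Hj Hz Hz'. destruct (kernel_at_small_disk_lipschitz logk logk_lip) as [L [HL HLip]].
  assert (HD : small_disk_lipschitz (log_ratio z z') (2 * L)).
  { intros h a b Hh Ha Hb.
    assert (A1 := HLip z (circle_closed_exterior j z Hj Hz) h a b Hh Ha Hb).
    assert (A2 := HLip z' (circle_closed_exterior j z' Hj Hz') h a b Hh Ha Hb).
    unfold kernel_at, logk in A1, A2. change (pnorm (psub ?x ?y)) with (pdist x y) in A1, A2.
    unfold log_ratio.
    replace (ln (pdist z a) - ln (pdist z' a) - (ln (pdist z b) - ln (pdist z' b))) with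
      ((ln (pdist z a) - ln (pdist z b)) - (ln (pdist z' a) - ln (pdist z' b))) by ring.
    eapply Rle_trans; [apply Rabs_triang|]. rewrite Rabs_Ropp. lra. }
  exists ((INR K - 1) * (2 * L * (2 * rsum))). intros n.
  rewrite (series_log_ratio j), Rabs_mult, sign_over_K_abs by auto.
  apply level_defect_rho; [| |lra|auto].
  - intros u k Hu. destruct u; [congruence|reflexivity].
  - intros u. unfold avoids_head. destruct (can_prepend j u); rewrite ?Rabs_R1, ?Rabs_R0; lra.
Qed.

Definition psi_limit G0 z := - / (2 * PI) * (G0 z + ln (pdist z z0)).

Lemma inv_2PI_pos : 0 < / (2 * PI).
Proof. apply Rinv_0_lt_compat. pose proof PI_RGT_0. lra. Qed.

Lemma psi_s_star_geometric G0 : kernel_limit logk G0 -> exists C, forall z, closed_exterior z ->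
  forall n, Rabs (psi_s_star K c r z0 n z - psi_limit G0 z) <= C * rho ^ n.
Proof.
  intros [C HC]. exists (/ (2 * PI) * C). intros z Hz n.
  rewrite psi_s_star_kernel_series. unfold psi_limit.
  replace (- / (2 * PI) * (kernel_series logk n z + ln (pdist z z0)) - - / (2 * PI) * (G0 z + ln (pdist z z0)))
    with (- / (2 * PI) * (kernel_series logk n z - G0 z)) by ring.
  rewrite Rabs_mult, Rabs_Ropp, Rabs_right, Rmult_assoc by (left; apply inv_2PI_pos).
  apply Rmult_le_compat_l; [left; apply inv_2PI_pos | auto].
Qed.

Lemma regularized_psi_s_star N z :
  psi_s_star K c r z0 N z + / (2 * PI) * ln (pdist z z0) = - / (2 * PI) * kernel_series logk N z.
Proof. rewrite psi_s_star_kernel_series. ring. Qed.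

Lemma harmonic_regularized_psi_s_star N :
  harmonic_on (Dom K c r) (fun z => psi_s_star K c r z0 N z + / (2 * PI) * ln (pdist z z0)).
Proof.
  apply (harmonic_on_ext _ (fun z => - / (2 * PI) * kernel_series logk N z)).
  - intros z. symmetry. apply regularized_psi_s_star.
  - apply harmonic_on_scal, harmonic_kernel_series.
Qed.

(* Uniform convergence holds on all of D, bounded or not. *)
Lemma regularized_psi_s_star_unif_cv :
  unif_cv_on (Dom K c r) (fun N z => psi_s_star K c r z0 N z + / (2 * PI) * ln (pdist z z0)).
Proof.
  destruct (kernel_series_converges logk logk_lip) as [G0 [C0 HG0]].
  exists (fun z => - / (2 * PI) * G0 z). intros eps He.
  destruct (geometric_eventually_lt (/ (2 * PI) * C0) rho eps rho_bounds He) as [N0 HN0]. exists N0.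
  intros N z HN Hz. rewrite regularized_psi_s_star, <- Rmult_minus_distr_l, Rabs_mult, Rabs_Ropp,
    (Rabs_right (/ (2 * PI))) by (left; apply inv_2PI_pos).
  eapply Rle_lt_trans; [|apply (HN0 N HN)]. rewrite Rmult_assoc.
  apply Rmult_le_compat_l; [left; apply inv_2PI_pos | apply HG0, Dom_closed_exterior; auto].
Qed.

Lemma psi_s_star_limit : exists psi : pt -> R,
  (forall z, Dom K c r z -> z <> z0 -> Un_cv (fun N => psi_s_star K c r z0 N z) (psi z)) /\
  harmonic_on (fun z => Dom K c r z /\ z <> z0) psi /\
  exists eps, eps > 0 /\ (forall z, pdist z z0 < eps -> Dom K c r z) /\
    exists H : pt -> R, harmonic_on (fun z => pdist z z0 < eps) H /\
      forall z, pdist z z0 < eps -> z <> z0 -> H z = psi z + / (2 * PI) * ln (pdist z z0).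
Proof.
  destruct (kernel_series_converges logk logk_lip) as [G0 HG0].
  destruct (psi_s_star_geometric G0 HG0) as [C HC].
  assert (HarmG0 := harmonic_kernel_limit G0 HG0).
  exists (psi_limit G0). split; [|split].
  - intros z Hz _ eps He. destruct (geometric_eventually_lt C rho eps rho_bounds He) as [N0 HN0].
    exists N0. intros n Hn. unfold R_dist.
    eapply Rle_lt_trans; [apply HC, Dom_closed_exterior; auto | apply HN0; lia].
  - unfold psi_limit. apply (harmonic_on_ext _ (fun z => - / (2 * PI) * G0 z + - / (2 * PI) * logk (psub z z0)));
      [intros; unfold logk, pnorm, pdist; ring|].
    apply harmonic_on_plus; apply harmonic_on_scal.
    + apply (harmonic_on_sub (Dom K c r)); [intros z [A _]; auto | auto].
    + apply harmonic_logk. intros z [_ A]; auto.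
  - destruct (Dom_open z0 Hz0) as [d [Hd Hball]]. exists d. repeat split; [lra|auto|].
    exists (fun z => - / (2 * PI) * G0 z). split.
    + apply harmonic_on_scal, (harmonic_on_sub (Dom K c r)); auto.
    + intros z _ _. unfold psi_limit. ring.
Qed.

Lemma psi_limit_const_on_circle G0 j z z' : kernel_limit logk G0 -> (j < K)%nat ->
  pdist z (c j) = r j -> pdist z' (c j) = r j -> psi_limit G0 z = psi_limit G0 z'.
Proof.
  intros HG0 Hj Hz Hz'. destruct (psi_s_star_geometric G0 HG0) as [C HC].
  destruct (series_log_ratio_bound j z z' Hj Hz Hz') as [C' HC'].
  apply Rminus_diag_uniq, (eq_0_of_le_geometric _ (2 * C + / (2 * PI) * C') rho rho_bounds). intros n.
  assert (A1 := HC z (circle_closed_exterior j z Hj Hz) (S n)).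
  assert (A2 := HC z' (circle_closed_exterior j z' Hj Hz') (S n)).
  assert (A3 : Rabs (psi_s_star K c r z0 (S n) z - psi_s_star K c r z0 (S n) z') <= / (2 * PI) * C' * rho ^ n).
  { rewrite !psi_s_star_series, <- Rmult_minus_distr_l, <- series_minus, Rabs_mult, Rabs_Ropp,
      Rabs_right, Rmult_assoc by (left; apply inv_2PI_pos).
    apply Rmult_le_compat_l; [left; apply inv_2PI_pos | apply HC']. }
  assert (Hq := rho_bounds). assert (rho ^ S n <= rho ^ n).
  { simpl. assert (0 <= rho ^ n) by (apply pow_le; lra). nra. }
  assert (0 <= C) by (assert (X := HC z (circle_closed_exterior j z Hj Hz) 0%nat);
                      pose proof (Rabs_pos (psi_s_star K c r z0 0 z - psi_limit G0 z)); simpl in X; lra).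
  assert (C * rho ^ S n <= C * rho ^ n) by (apply Rmult_le_compat_l; auto).
  replace (psi_limit G0 z - psi_limit G0 z') with
    ((psi_limit G0 z - psi_s_star K c r z0 (S n) z) +
     (psi_s_star K c r z0 (S n) z - psi_s_star K c r z0 (S n) z') +
     (psi_s_star K c r z0 (S n) z' - psi_limit G0 z')) by ring.
  rewrite Rabs_minus_sym in A1.
  eapply Rle_trans; [apply Rabs_triang|]. eapply Rle_trans; [apply Rplus_le_compat_r, Rabs_triang|].
  nra.
Qed.

Lemma psi_s_star_circle_const j : (j < K)%nat -> exists Cj : R, forall eps, eps > 0 ->
  exists N0, forall N z, (N >= N0)%nat -> pdist z (c j) = r j -> Rabs (psi_s_star K c r z0 N z - Cj) < eps.
Proof.
  intros Hj. destruct (kernel_series_converges logk logk_lip) as [G0 HG0].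
  destruct (psi_s_star_geometric G0 HG0) as [C HC].
  set (zj := (fst (c j) + r j, snd (c j))).
  assert (Hzj : pdist zj (c j) = r j).
  { apply pdist_of_nsq; [assert (X := Hr j Hj); lra|]. unfold nsq, psub, zj; simpl. ring. }
  exists (psi_limit G0 zj). intros eps He.
  destruct (geometric_eventually_lt C rho eps rho_bounds He) as [N0 HN0]. exists N0.
  intros N z HN Hz. rewrite <- (psi_limit_const_on_circle G0 j z zj) by auto.
  eapply Rle_lt_trans; [apply HC, (circle_closed_exterior j); auto | apply HN0; lia].
Qed.

End ExteriorSeries.

Theorem mainTheorem1 (K : nat) (c : nat -> pt) (r : nat -> R) (z0 : pt)
  (HK : (2 <= K)%nat)
  (Hr : forall j, (j < K)%nat -> r j > 0)
  (Hdisj : forall i j, (i < K)%nat -> (j < K)%nat -> i <> j ->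
             pdist (c i) (c j) > r i + r j)
  (Hz0 : Dom K c r z0)
  (HP : (INR K - 1) * P_max K c r z0 ^ 2 < 1) :
  let h := fun N z => psi_s_star K c r z0 N z + / (2 * PI) * ln (pdist z z0) in
  ((forall N, harmonic_on (Dom K c r) (h N)) /\
   (forall S, compact2 S -> (forall z, S z -> Dom K c r z) -> unif_cv_on S h) /\
   exists psi : pt -> R,
     (forall z, Dom K c r z -> z <> z0 ->
        Un_cv (fun N => psi_s_star K c r z0 N z) (psi z)) /\
     harmonic_on (fun z => Dom K c r z /\ z <> z0) psi /\
     exists eps, eps > 0 /\ (forall z, pdist z z0 < eps -> Dom K c r z) /\
       exists H : pt -> R,
         harmonic_on (fun z => pdist z z0 < eps) H /\
         forall z, pdist z z0 < eps -> z <> z0 ->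
           H z = psi z + / (2 * PI) * ln (pdist z z0)) /\
  (forall j, (j < K)%nat -> exists Cj : R,
     forall eps, eps > 0 -> exists N0, forall N z,
       (N >= N0)%nat -> pdist z (c j) = r j ->
       Rabs (psi_s_star K c r z0 N z - Cj) < eps).
Proof.
  intros h. split; [split; [|split]|].
  - intros N. apply harmonic_regularized_psi_s_star; auto.
  - intros S _ HS. apply (unif_cv_on_sub (Dom K c r)); auto. apply regularized_psi_s_star_unif_cv; auto.
  - apply psi_s_star_limit; auto.
  - apply psi_s_star_circle_const; auto.
Qed.
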